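(* Let $\Lambda$ be a countable row-finite $k$-graph without sources. There is a bijective correspondence $D\mapsto U_D$ between the subsets $D\subset\Lambda^0\times\mathbb{T}^k$ satisfying (i) and (ii) below and the $\mathcal{G}_\Lambda$-invariant open subsets of $\mathrm{Stab}(\mathcal{G}_\Lambda)^\wedge$, determined by $q^{-1}(U_D)=\{(x,z)\in\Lambda^\infty\times\mathbb{T}^k: (x(n),z)\in D\text{ for some }n\in\mathbb{Z}^k_+\}$: (i) for every $z\in\mathbb{T}^k$ the set $\{v\in\Lambda^0:(v,z)\in D\}$ is hereditary and saturated; (ii) for every $(v,z)\in D$ and every $x\in Z(v)$ there exist $\varepsilon>0$, $n\in\mathbb{Z}^k_+$ and a finite set $\{(m(i),n(i))\}_{i=1}^N\subset\mathbb{Z}^k_+\times\mathbb{Z}^k_+$ with $\sigma^{m(i)}(x)=\sigma^{n(i)}(x)$ for all $i$, such that for each $y\in Z(x(0,n))$ there is $m\in\mathbb{Z}^k_+$ with $\{y(m)\}\times T_y\subset D$, where $T_y=\{w\in\mathbb{T}^k: |z^{m(i)-n(i)}-w^{m(i)-n(i)}|<\varepsilon\text{ for all } i\text{ with }\sigma^{m(i)}(y)=\sigma^{n(i)}(y)\}$ (so $T_y=\mathbb{T}^k$ if no such $i$ exists).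
   Context: A $k$-graph is a countable category $\Lambda$ with a functor $d\colon\Lambda\to\mathbb{Z}^k_+$ (degree) such that whenever $d(\lambda)=m+n$ there is a unique factorization $\lambda=\mu\nu$ with $d(\mu)=m$, $d(\nu)=n$. $\Lambda^n=d^{-1}(n)$, $\Lambda^0$ = vertices, $r,s$ codomain/domain; row-finite without sources means $0<|v\Lambda^n|<\infty$ for all $v$, $n$, where $v\Lambda^n=\{\lambda\in\Lambda^n: r(\lambda)=v\}$. $\Omega_k=\{(p,q)\in\mathbb{Z}^k_+\times\mathbb{Z}^k_+:p\le q\}$ is the $k$-graph with $d(p,q)=q-p$; $\Lambda^\infty$ is the set of degree-preserving functors $x\colon\Omega_k\to\Lambda$, with $x(n):=x(n,n)$; $Z(\lambda)=\{x: x(0,d(\lambda))=\lambda\}$ form a basis of compact open sets. $\sigma^n(x)(p,q)=x(n+p,n+q)$. $\mathcal{G}_\Lambda=\{(x,m-n,y): m,n\in\mathbb{Z}^k_+,\ \sigma^m(x)=\sigma^n(y)\}$ with $r(x,p,y)=x$, $s(x,p,y)=y$, $(x,p,y)(y,q,w)=(x,p+q,w)$, topology basis $Z(U,m,n,V)=\{(x,m-n,y):x\in U,y\in V,\sigma^m(x)=\sigma^n(y)\}$; unit space $\Lambda^\infty$. $\mathrm{Stab}(\mathcal{G}_\Lambda)^\wedge$ is the set of pairs $(x,\chi)$, $\chi$ a character of the isotropy group $(\mathcal{G}_\Lambda)^x_x=\{(x,l,x)\}$, with topology having as basis the finite intersections of $\mathcal{O}(U,K,V)=\{(x,\chi):x\in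 U,\ \chi(K\cap(\mathcal{G}_\Lambda)^x_x)\subset V\}$ ($U$ open, $K$ compact in the isotropy bundle, $V\subset\mathbb{T}$ open); $\mathcal{G}_\Lambda$ acts by $g(x,\chi)=(r(g),\chi(g^{-1}\cdot g))$. $q(x,z)=(x,\ (x,l,x)\mapsto z^l)$ with $z^l=\prod_j z_j^{l_j}$. A set $H\subset\Lambda^0$ is hereditary if $r(\lambda)\in H\Rightarrow s(\lambda)\in H$, and saturated if $s(v\Lambda^n)\subset H$ for some $n$ implies $v\in H$. *)

From Stdlib Require Import Reals ZArith.
From Stdlib Require List.
From mathcomp Require Import all_boot.

Set Implicit Arguments.
Unset Strict Implicit.
Unset Printing Implicit Defensive.

Definition NN (k : nat) := {ffun 'I_k -> nat}.
Definition zeroNN (k : nat) : NN k := [ffun _ => 0%N].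
Definition addNN (k : nat) (m n : NN k) : NN k := [ffun i => (m i + n i)%N].
Definition leNN (k : nat) (m n : NN k) : bool := [forall i, (m i <= n i)%N].

Lemma le0NN (k : nat) (n : NN k) : leNN (zeroNN k) n.
Proof. by apply/forallP => i; rewrite ffunE. Qed.

Lemma leNN_refl (k : nat) (n : NN k) : leNN n n.
Proof. by apply/forallP => i. Qed.

Lemma leNN_add2l (k : nat) (m p q : NN k) : leNN p q -> leNN (addNN m p) (addNN m q).
Proof. by move=> /forallP h; apply/forallP => i; rewrite !ffunE leq_add2l. Qed.

Definition ZZ (k : nat) := {ffun 'I_k -> Z}.
Definition addZZ (k : nat) (a b : ZZ k) : ZZ k := [ffun i => (a i + b i)%Z].
Definition oppZZ (k : nat) (a : ZZ k) : ZZ k := [ffun i => (- a i)%Z].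
Definition diffNN (k : nat) (m n : NN k) : ZZ k :=
  [ffun i => (Z.of_nat (m i) - Z.of_nat (n i))%Z].

Local Open Scope R_scope.

Record circ : Type := Circ {
  cre : R; cim : R;
  cnorm : Rplus (Rmult cre cre) (Rmult cim cim) = R1 }.

Definition cone : circ.
Proof. refine (@Circ 1 0 _). abstract ring. Defined.

Definition cmul (z w : circ) : circ.
Proof.
refine (@Circ (cre z * cre w - cim z * cim w) (cre z * cim w + cim z * cre w) _).
abstract (destruct z as [a b hz]; destruct w as [c d hw]; simpl;
  replace ((a * c - b * d) * (a * c - b * d) + (a * d + b * c) * (a * d + b * c))
    with ((a * a + b * b) * (c * c + d * d)) by ring;
  rewrite hz hw; ring).
Defined.

Definition cinv (z : circ) : circ.
Proof.
refine (@Circ (cre z) (- cim z) _).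
abstract (destruct z as [a b hz]; simpl;
  replace (a * a + - b * - b) with (a * a + b * b) by ring; exact hz).
Defined.

Definition cpowP (z : circ) (p : positive) : circ := Pos.iter (cmul z) cone p.

Definition cpowZ (z : circ) (n : Z) : circ :=
  match n with
  | Z0 => cone
  | Zpos p => cpowP z p
  | Zneg p => cpowP (cinv z) p
  end.

Definition cdist (z w : circ) : R :=
  sqrt ((cre z - cre w) * (cre z - cre w) + (cim z - cim w) * (cim z - cim w)).

Definition open_circ (V : circ -> Prop) : Prop :=
  forall w, V w -> exists eps : R, 0 < eps /\
    forall w', cdist w w' < eps -> V w'.

Local Close Scope R_scope.

Definition torus (k : nat) := 'I_k -> circ.

Definition zpow (k : nat) (z : torus k) (l : ZZ k) : circ :=
  \big[cmul/cone]_(i < k) cpowZ (z i) (l i).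

(* Composition is total with an arbitrary
   value on non-composable pairs; kcomp f g is "f g" (first g, then f),
   defined when kdom f = kcod g. kcod = r (codomain), kdom = s (domain). *)
Record kgraph (k : nat) : Type := KGraph {
  kobj : Type;
  kmor : Type;
  kcod : kmor -> kobj;
  kdom : kmor -> kobj;
  kid : kobj -> kmor;
  kcomp : kmor -> kmor -> kmor;
  kdeg : kmor -> NN k;
  kid_cod : forall v, kcod (kid v) = v;
  kid_dom : forall v, kdom (kid v) = v;
  kcomp_cod : forall f g, kdom f = kcod g -> kcod (kcomp f g) = kcod f;
  kcomp_dom : forall f g, kdom f = kcod g -> kdom (kcomp f g) = kdom g;
  kid_l : forall f, kcomp (kid (kcod f)) f = f;
  kid_r : forall f, kcomp f (kid (kdom f)) = f;
  kassoc : forall f g h, kdom f = kcod g -> kdom g = kcod h ->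
             kcomp f (kcomp g h) = kcomp (kcomp f g) h;
  kdeg_id : forall v, kdeg (kid v) = zeroNN k;
  kdeg_comp : forall f g, kdom f = kcod g ->
             kdeg (kcomp f g) = addNN (kdeg f) (kdeg g);
  kfact : forall (l : kmor) (m n : NN k), kdeg l = addNN m n ->
    exists! mn : kmor * kmor,
      kdom mn.1 = kcod mn.2 /\ kcomp mn.1 mn.2 = l /\
      kdeg mn.1 = m /\ kdeg mn.2 = n;
  kcountable : exists f : kmor -> nat, injective f
}.










(* row-finite without sources: 0 < |v Lambda^n| < infinity *)
Definition row_finite_no_sources (k : nat) (L : kgraph k) : Prop :=
  forall (v : kobj L) (n : NN k),
    (exists l : kmor L, kcod l = v /\ kdeg l = n) /\
    (exists s : list (kmor L), forall l, kcod l = v -> kdeg l = n -> List.In l s).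

Definition hereditary (k : nat) (L : kgraph k) (H : kobj L -> Prop) : Prop :=
  forall l : kmor L, H (kcod l) -> H (kdom l).

Definition saturated (k : nat) (L : kgraph k) (H : kobj L -> Prop) : Prop :=
  forall (v : kobj L) (n : NN k),
    (forall l : kmor L, kcod l = v -> kdeg l = n -> H (kdom l)) -> H v.

(* Infinite paths: degree-preserving functors Omega_k -> Lambda          *)

(* Object p of Omega_k goes to pv p; the morphism (p,q), p <= q, to pm p q _.
   In Omega_k, r(p,q) = p, s(p,q) = q, (p,q)(q,r) = (p,r), d(p,q) = q - p. *)
Record ipath (k : nat) (L : kgraph k) : Type := IPath {
  pv : NN k -> kobj L;
  pm : forall p q : NN k, leNN p q -> kmor L;
  pm_cod : forall p q (h : leNN p q), kcod (pm h) = pv p;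
  pm_dom : forall p q (h : leNN p q), kdom (pm h) = pv q;
  pm_id : forall p (h : leNN p p), pm h = kid (pv p);
  pm_comp : forall p q r (h1 : leNN p q) (h2 : leNN q r) (h3 : leNN p r),
    kcomp (pm h1) (pm h2) = pm h3;
  pm_deg : forall p q (h : leNN p q) i, kdeg (pm h) i = (q i - p i)%N
}.

Definition seg0 (k : nat) (L : kgraph k) (x : ipath L) (n : NN k) : kmor L :=
  pm x (le0NN n).

Definition cyl (k : nat) (L : kgraph k) (l : kmor L) (x : ipath L) : Prop :=
  seg0 x (kdeg l) = l.

Definition open_path (k : nat) (L : kgraph k) (U : ipath L -> Prop) : Prop :=
  forall x, U x -> exists l : kmor L, cyl l x /\ forall y, cyl l y -> U y.

(* sigma^m(x) = sigma^n(y), written out: both functors agree on all objects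
   and morphisms of Omega_k *)
Definition shift_eq (k : nat) (L : kgraph k) (m : NN k) (x : ipath L)
  (n : NN k) (y : ipath L) : Prop :=
  (forall p, pv x (addNN m p) = pv y (addNN n p)) /\
  (forall p q (h : leNN p q),
     pm x (leNN_add2l m h) = pm y (leNN_add2l n h)).

Record gel (k : nat) (L : kgraph k) : Type := GEl {
  grng : ipath L;
  glab : ZZ k;
  gsrc : ipath L
}.

Definition inG (k : nat) (L : kgraph k) (g : gel L) : Prop :=
  exists m n : NN k, glab g = diffNN m n /\ shift_eq m (grng g) n (gsrc g).

Definition Zbasic (k : nat) (L : kgraph k) (U : ipath L -> Prop) (m n : NN k)
  (V : ipath L -> Prop) (g : gel L) : Prop :=
  U (grng g) /\ V (gsrc g) /\ glab g = diffNN m n /\ shift_eq m (grng g) n (gsrc g).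

Definition open_G (k : nat) (L : kgraph k) (W : gel L -> Prop) : Prop :=
  forall g, W g -> exists (U : ipath L -> Prop) (m n : NN k) (V : ipath L -> Prop),
    open_path U /\ open_path V /\ Zbasic U m n V g /\
    forall g', Zbasic U m n V g' -> W g'.

Definition iso_bundle (k : nat) (L : kgraph k) (g : gel L) : Prop :=
  inG g /\ grng g = gsrc g.

Definition compact_iso (k : nat) (L : kgraph k) (K : gel L -> Prop) : Prop :=
  (forall g, K g -> iso_bundle g) /\
  forall (I : Type) (W : I -> gel L -> Prop),
    (forall i, open_G (W i)) ->
    (forall g, K g -> exists i, W i g) ->
    exists s : list I, forall g, K g -> exists i, List.In i s /\ W i g.

Definition isoL (k : nat) (L : kgraph k) (x : ipath L) (l : ZZ k) : Prop :=
  inG (GEl x l x).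

(* A character of (G)^x_x = {(x,l,x)} is represented by the function
   l |-> chi(x,l,x), extended by 1 outside the isotropy labels (so that the
   representation is canonical). *)
Definition is_char (k : nat) (L : kgraph k) (x : ipath L) (chi : ZZ k -> circ) : Prop :=
  (forall l1 l2, isoL x l1 -> isoL x l2 -> chi (addZZ l1 l2) = cmul (chi l1) (chi l2)) /\
  (forall l, ~ isoL x l -> chi l = cone).

Record stab (k : nat) (L : kgraph k) : Type := Stab {
  sx : ipath L;
  schi : ZZ k -> circ;
  schi_ok : is_char sx schi
}.

Definition Obasic (k : nat) (L : kgraph k) (U : ipath L -> Prop) (K : gel L -> Prop)
  (V : circ -> Prop) (s : stab L) : Prop :=
  U (sx s) /\ forall l, K (GEl (sx s) l (sx s)) -> V (schi s l).

Definition valid_basic (k : nat) (L : kgraph k)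
  (b : (ipath L -> Prop) * (gel L -> Prop) * (circ -> Prop)) : Prop :=
  open_path b.1.1 /\ compact_iso b.1.2 /\ open_circ b.2.

Definition in_basics (k : nat) (L : kgraph k)
  (bs : list ((ipath L -> Prop) * (gel L -> Prop) * (circ -> Prop))) (s : stab L) : Prop :=
  forall b, List.In b bs -> Obasic b.1.1 b.1.2 b.2 s.

Definition open_stab (k : nat) (L : kgraph k) (W : stab L -> Prop) : Prop :=
  forall s, W s -> exists bs, (forall b, List.In b bs -> valid_basic b) /\
    in_basics bs s /\ forall s', in_basics bs s' -> W s'.

(* s' = g . s, i.e. s' = (r(g), chi(g^{-1} . g)); here g = (r g, p, s g) and
   g^{-1}(r g, l, r g) g = (s g, -p + l + p, s g). *)
Definition act_rel (k : nat) (L : kgraph k) (g : gel L) (s s' : stab L) : Prop :=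
  gsrc g = sx s /\ sx s' = grng g /\
  forall l, isoL (grng g) l ->
    schi s' l = schi s (addZZ (addZZ (oppZZ (glab g)) l) (glab g)).

Definition G_invariant (k : nat) (L : kgraph k) (W : stab L -> Prop) : Prop :=
  forall (g : gel L) (s s' : stab L), inG g -> act_rel g s s' -> W s -> W s'.

Definition q_rel (k : nat) (L : kgraph k) (x : ipath L) (z : torus k) (s : stab L) : Prop :=
  sx s = x /\ forall l, isoL x l -> schi s l = zpow z l.

Definition q_preimage (k : nat) (L : kgraph k) (W : stab L -> Prop)
  (x : ipath L) (z : torus k) : Prop :=
  exists s, q_rel x z s /\ W s.

Definition cond_i (k : nat) (L : kgraph k) (D : kobj L * torus k -> Prop) : Prop :=
  forall z : torus k, hereditary (fun v => D (v, z)) /\ saturated (fun v => D (v, z)).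

Definition cond_ii (k : nat) (L : kgraph k) (D : kobj L * torus k -> Prop) : Prop :=
  forall (v : kobj L) (z : torus k), D (v, z) ->
  forall x : ipath L, cyl (kid v) x ->
  exists (eps : R) (n : NN k) (mns : list (NN k * NN k)),
    Rlt 0 eps /\
    (forall mn, List.In mn mns -> shift_eq mn.1 x mn.2 x) /\
    forall y : ipath L, cyl (seg0 x n) y ->
      exists m : NN k, forall w : torus k,
        (forall mn, List.In mn mns -> shift_eq mn.1 y mn.2 y ->
           Rlt (cdist (zpow z (diffNN mn.1 mn.2)) (zpow w (diffNN mn.1 mn.2))) eps) ->
        D (pv y m, w).

Definition D_saturation (k : nat) (L : kgraph k) (D : kobj L * torus k -> Prop)
  (x : ipath L) (z : torus k) : Prop :=
  exists n : NN k, D (pv x n, z).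

From Stdlib Require Import Reals ZArith Lra Psatz Lia.
From Stdlib Require Import ProofIrrelevance ClassicalEpsilon Classical FunctionalExtensionality.
From Stdlib Require List.
From HB Require Import structures.
From mathcomp Require Import all_boot.
From mathcomp Require Import zify.

Set Implicit Arguments.
Unset Strict Implicit.
Unset Printing Implicit Defensive.

(* The map q : Lambda^infty x T^k -> Stab(G_Lambda)^ is onto because T is divisible, so every
   character of a subgroup of Z^k is of the form l |-> z^l.  For an invariant U, q^{-1}(U) is
   invariant under tail equivalence, hence it is the saturation of
   D_U = {(v, z) : (x, z) in q^{-1}(U) for every x in Z(v)}, which is hereditary and saturated.
   Condition (ii) is what openness in Stab(G_Lambda)^ becomes after pulling back by q: a basic
   neighbourhood constrains x to a cylinder and the character on a compact piece of isotropy; such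
   a piece is covered by finitely many sets {(y, m - n, y) : sigma^m y = sigma^n y}, so only
   finitely many values z^(m - n) matter, and conversely these sets are compact by Koenig's lemma
   on the row-finite graph.  Finally (i) makes a set D recoverable from its saturation. *)

(** * The circle group *)

Lemma circ_eq (z w : circ) : cre z = cre w -> cim z = cim w -> z = w.
Proof.
case: z => [a b h]; case: w => [c d h'] /= e1 e2; subst.
by rewrite (proof_irrelevance _ h h').
Qed.

Lemma cmulA : associative cmul.
Proof. by move=> x y z; apply: circ_eq => /=; ring. Qed.
Lemma cmulC : commutative cmul.
Proof. by move=> x y; apply: circ_eq => /=; ring. Qed.
Lemma cmul1l : left_id cone cmul.
Proof. by move=> x; apply: circ_eq => /=; ring. Qed.
Lemma cmul1r : right_id cone cmul.
Proof. by move=> x; rewrite cmulC cmul1l. Qed.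
Lemma cmulV (z : circ) : cmul z (cinv z) = cone.
Proof. by case: z => a b h; apply: circ_eq => /=; nra. Qed.
Lemma cmulVl (z : circ) : cmul (cinv z) z = cone.
Proof. by rewrite cmulC cmulV. Qed.
Lemma cmulI (a b c : circ) : cmul a b = cmul a c -> b = c.
Proof.
move=> h; have : cmul (cinv a) (cmul a b) = cmul (cinv a) (cmul a c) by rewrite h.
by rewrite !cmulA cmulVl !cmul1l.
Qed.
Lemma cmulACA (a b c d : circ) : cmul (cmul a b) (cmul c d) = cmul (cmul a c) (cmul b d).
Proof. by rewrite -!cmulA (cmulA b) (cmulC b) -cmulA. Qed.

HB.instance Definition _ := Monoid.isComLaw.Build circ cone cmul cmulA cmulC cmul1l.

Lemma cinvM (z w : circ) : cinv (cmul z w) = cmul (cinv z) (cinv w).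
Proof. by apply: circ_eq => /=; ring. Qed.
Lemma cinv1 : cinv cone = cone.
Proof. by apply: circ_eq => /=; ring. Qed.
Lemma cinvK (z : circ) : cinv (cinv z) = z.
Proof. by apply: circ_eq => /=; ring. Qed.

Definition cpowN (z : circ) (n : nat) : circ := iter n (cmul z) cone.

Lemma cpowNS z n : cpowN z n.+1 = cmul z (cpowN z n).
Proof. by []. Qed.
Lemma cpowND z m n : cpowN z (m + n) = cmul (cpowN z m) (cpowN z n).
Proof. by elim: m => [|m IH]; rewrite ?cmul1l // addSn !cpowNS IH cmulA. Qed.
Lemma cpowN_cmul z w n : cpowN (cmul z w) n = cmul (cpowN z n) (cpowN w n).
Proof. by elim: n => [|n IH]; rewrite ?cmul1l // !cpowNS IH cmulACA. Qed.
Lemma cpowN_cinv z n : cpowN (cinv z) n = cinv (cpowN z n).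
Proof. by elim: n => [|n IH]; rewrite ?cinv1 // !cpowNS IH cinvM. Qed.
Lemma cpowNM z m n : cpowN z (m * n) = cpowN (cpowN z m) n.
Proof. by elim: n => [|n IH]; rewrite ?muln0 // mulnS cpowND IH. Qed.
Lemma cpowN_one n : cpowN cone n = cone.
Proof. by elim: n => [|n IH] //; rewrite cpowNS IH cmul1l. Qed.
Lemma cpowNB z m n : (n <= m)%N -> cpowN z (m - n) = cmul (cpowN z m) (cinv (cpowN z n)).
Proof. by move=> h; rewrite -{2}(subnK h) cpowND -cmulA cmulV cmul1r. Qed.

Lemma cpowP_cpowN z p : cpowP z p = cpowN z (Pos.to_nat p).
Proof. by rewrite /cpowP Pos2Nat.inj_iter. Qed.

Lemma cpowZ_nat z (n : nat) : cpowZ z (Z.of_nat n) = cpowN z n.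
Proof. by case: n => [|n] //=; rewrite cpowP_cpowN SuccNat2Pos.id_succ. Qed.
Lemma cpowZ_oppnat z (n : nat) : cpowZ z (- Z.of_nat n) = cinv (cpowN z n).
Proof.
case: n => [|n] /=; first by rewrite cinv1.
by rewrite cpowP_cpowN SuccNat2Pos.id_succ cpowN_cinv.
Qed.

Lemma Z_nat_cases (a : Z) : exists n : nat, a = Z.of_nat n \/ a = (- Z.of_nat n)%Z.
Proof. exists (Z.abs_nat a); lia. Qed.

Lemma cpowZ_natB z (m n : nat) :
  cpowZ z (Z.of_nat m - Z.of_nat n) = cmul (cpowN z m) (cinv (cpowN z n)).
Proof.
case: (leqP n m) => h.
  by rewrite -Nat2Z.inj_sub ?cpowZ_nat ?minusE ?cpowNB //; apply/leP.
have -> : (Z.of_nat m - Z.of_nat n = - Z.of_nat (n - m))%Z by lia.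
by rewrite cpowZ_oppnat cpowNB 1?ltnW // cinvM cinvK cmulC.
Qed.

Lemma cpowZD z a b : cpowZ z (a + b) = cmul (cpowZ z a) (cpowZ z b).
Proof.
have [m [->|->]] := Z_nat_cases a; have [n [->|->]] := Z_nat_cases b.
- by rewrite -Nat2Z.inj_add !cpowZ_nat cpowND.
- by rewrite -Z.sub_opp_r Z.opp_involutive cpowZ_natB cpowZ_nat cpowZ_oppnat.
- by rewrite Z.add_comm -Z.sub_opp_r Z.opp_involutive cpowZ_natB cpowZ_nat cpowZ_oppnat cmulC.
- by rewrite -Z.opp_add_distr -Nat2Z.inj_add !cpowZ_oppnat cpowND cinvM.
Qed.

Lemma cpowZN z a : cpowZ z (- a) = cinv (cpowZ z a).
Proof.
apply: (@cmulI (cpowZ z a)).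
by rewrite -cpowZD Z.add_opp_diag_r cmulV.
Qed.

Lemma cpowZ_cmul z w a : cpowZ (cmul z w) a = cmul (cpowZ z a) (cpowZ w a).
Proof.
have [n [->|->]] := Z_nat_cases a.
  by rewrite !cpowZ_nat cpowN_cmul.
by rewrite !cpowZ_oppnat cpowN_cmul cinvM.
Qed.

Lemma cpowZ_one a : cpowZ cone a = cone.
Proof.
by have [n [->|->]] := Z_nat_cases a; rewrite ?cpowZ_nat ?cpowZ_oppnat cpowN_one ?cinv1.
Qed.

Lemma cpowZ_cinv y a : cpowZ (cinv y) a = cinv (cpowZ y a).
Proof. by apply: (@cmulI (cpowZ y a)); rewrite -cpowZ_cmul !cmulV cpowZ_one. Qed.

Lemma cpowZM z a b : cpowZ (cpowZ z a) b = cpowZ z (a * b).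
Proof.
have cpowZ_cpowN y n c : cpowZ (cpowN y n) c = cpowZ y (Z.of_nat n * c).
  have [m [->|->]] := Z_nat_cases c.
    by rewrite -Nat2Z.inj_mul !cpowZ_nat cpowNM.
  by rewrite Z.mul_opp_r -Nat2Z.inj_mul !cpowZ_oppnat cpowNM.
have [n [->|->]] := Z_nat_cases a; first by rewrite cpowZ_nat.
by rewrite cpowZ_oppnat cpowZ_cinv cpowZ_cpowN Z.mul_opp_l cpowZN.
Qed.

Lemma zpowD k (z : torus k) (a b : ZZ k) :
  zpow z (addZZ a b) = cmul (zpow z a) (zpow z b).
Proof. by rewrite /zpow -big_split; apply: eq_bigr => i _; rewrite ffunE cpowZD. Qed.

Definition zeroZZ k : ZZ k := [ffun _ => 0%Z].

Lemma zpow0 k (z : torus k) : zpow z (zeroZZ k) = cone.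
Proof. by rewrite /zpow big1 // => i _; rewrite ffunE. Qed.

Local Open Scope R_scope.

Definition ang (t : R) : circ.
Proof. refine (@Circ (cos t) (sin t) _); abstract (have := sin2_cos2 t; rewrite /Rsqr; lra). Defined.

Lemma cpowN_ang x n : cpowN (ang x) n = ang (INR n * x).
Proof.
elim: n => [|n IH]; first by apply: circ_eq; rewrite /= Rmult_0_l ?cos_0 ?sin_0.
rewrite cpowNS IH S_INR Rmult_plus_distr_r Rmult_1_l Rplus_comm.
by apply: circ_eq; rewrite /= ?cos_plus ?sin_plus; ring.
Qed.

Lemma circ_ang (c : circ) : exists t, c = ang t.
Proof.
case: c => a b h; have ha : -1 <= a <= 1 by nra.
case: (Rle_dec 0 b) => hb.
- exists (acos a); apply: circ_eq => /=; first by rewrite cos_acos.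
  rewrite sin_acos // /Rsqr -(sqrt_square b) //; congr sqrt; lra.
- exists (- acos a); apply: circ_eq => /=; first by rewrite cos_neg cos_acos.
  rewrite sin_neg sin_acos // /Rsqr (_ : 1 - a * a = - b * - b); last lra.
  rewrite sqrt_square; lra.
Qed.

(* The circle is a divisible group; this is what lets characters extend. *)
Lemma cpowN_surj (c : circ) (d : nat) : (0 < d)%N -> exists t, cpowN t d = c.
Proof.
move=> hd; have [th ->] := circ_ang c.
exists (ang (th / INR d)); rewrite cpowN_ang; f_equal.
by field; apply: not_0_INR; case: d hd.
Qed.

Lemma plane_norm_triangle (x1 y1 x2 y2 : R) :
  sqrt ((x1 + x2) * (x1 + x2) + (y1 + y2) * (y1 + y2)) <=
  sqrt (x1 * x1 + y1 * y1) + sqrt (x2 * x2 + y2 * y2).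
Proof.
set s1 := sqrt (x1 * x1 + y1 * y1); set s2 := sqrt (x2 * x2 + y2 * y2).
have e1 : s1 * s1 = x1 * x1 + y1 * y1 by apply: sqrt_sqrt; nra.
have e2 : s2 * s2 = x2 * x2 + y2 * y2 by apply: sqrt_sqrt; nra.
have g1 : 0 <= s1 := sqrt_pos _.
have g2 : 0 <= s2 := sqrt_pos _.
have cauchy_schwarz : x1 * x2 + y1 * y2 <= s1 * s2.
  have : (x1 * x2 + y1 * y2) * (x1 * x2 + y1 * y2) <= (s1 * s2) * (s1 * s2).
    have -> : (s1 * s2) * (s1 * s2) = (s1 * s1) * (s2 * s2) by ring.
    rewrite e1 e2; have := Rle_0_sqr (x1 * y2 - x2 * y1); rewrite /Rsqr; nra.
  have : 0 <= s1 * s2 by nra.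
  nra.
rewrite -(sqrt_square (s1 + s2)); last lra.
apply: sqrt_le_1_alt; nra.
Qed.

Lemma cdist_triangle a b c : cdist a c <= cdist a b + cdist b c.
Proof.
have := plane_norm_triangle (cre a - cre b) (cim a - cim b) (cre b - cre c) (cim b - cim c).
by rewrite /cdist (_ : cre a - cre b + (cre b - cre c) = cre a - cre c) 1?(_ : cim a - cim b
  + (cim b - cim c) = cim a - cim c) //; ring.
Qed.

Lemma cdist_refl a : cdist a a = 0.
Proof. by rewrite /cdist !Rminus_diag_eq // Rmult_0_l Rplus_0_l sqrt_0. Qed.

Lemma open_circ_ball (c : circ) (e : R) : open_circ (fun w => cdist c w < e).
Proof.
move=> w hw; exists (e - cdist c w); split; first lra.
by move=> w' h; have := cdist_triangle c w w'; lra.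
Qed.

Local Close Scope R_scope.

(** * Characters of subgroups of Z^k extend to Z^k *)

Section CharExtension.
Variable k : nat.

Lemma ZZ_ext (a b : ZZ k) : (forall i, a i = b i) -> a = b.
Proof. by move=> h; apply/ffunP. Qed.

Definition scZZ (c : Z) (v : ZZ k) : ZZ k := [ffun i => (c * v i)%Z].

Definition zsubgroup (S : ZZ k -> Prop) :=
  S (zeroZZ k) /\ (forall a b, S a -> S b -> S (addZZ a b)) /\ (forall a, S a -> S (oppZZ a)).

Definition zchar (S : ZZ k -> Prop) (chi : ZZ k -> circ) :=
  forall a b, S a -> S b -> chi (addZZ a b) = cmul (chi a) (chi b).

Section Subgroup.
Variable S : ZZ k -> Prop.
Hypothesis hS : zsubgroup S.

Lemma zsubgroup_scale a c : S a -> S (scZZ c a).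
Proof.
have [h0 [hadd hopp]] := hS; move=> ha.
have nat_scale (n : nat) : S (scZZ (Z.of_nat n) a).
  elim: n => [|n IH]; first by rewrite (_ : scZZ _ a = zeroZZ k) //; apply: ZZ_ext => i; rewrite !ffunE.
  rewrite (_ : scZZ _ a = addZZ (scZZ (Z.of_nat n) a) a); first exact: hadd.
  by apply: ZZ_ext => i; rewrite !ffunE; lia.
have [n [->|->]] := Z_nat_cases c; first exact: nat_scale.
rewrite (_ : scZZ _ a = oppZZ (scZZ (Z.of_nat n) a)); first exact/hopp/nat_scale.
by apply: ZZ_ext => i; rewrite !ffunE; lia.
Qed.

Section Char.
Variable chi : ZZ k -> circ.
Hypothesis hchi : zchar S chi.

Lemma zchar0 : chi (zeroZZ k) = cone.
Proof.
have [h0 _] := hS; apply: (@cmulI (chi (zeroZZ k))).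
by rewrite -hchi // cmul1r (_ : addZZ _ _ = zeroZZ k) //; apply: ZZ_ext => i; rewrite !ffunE.
Qed.

Lemma zcharN a : S a -> chi (oppZZ a) = cinv (chi a).
Proof.
have [_ [_ hopp]] := hS; move=> ha; apply: (@cmulI (chi a)).
rewrite -(hchi ha (hopp _ ha)) cmulV (_ : addZZ a (oppZZ a) = zeroZZ k) ?zchar0 //.
by apply: ZZ_ext => i; rewrite !ffunE; lia.
Qed.

Lemma zchar_scale a c : S a -> chi (scZZ c a) = cpowZ (chi a) c.
Proof.
have [h0 [hadd _]] := hS; move=> ha.
have nat_scale (n : nat) : chi (scZZ (Z.of_nat n) a) = cpowN (chi a) n.
  elim: n => [|n IH].
    by rewrite (_ : scZZ _ a = zeroZZ k) ?zchar0 //; apply: ZZ_ext => i; rewrite !ffunE.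
  rewrite (_ : scZZ _ a = addZZ (scZZ (Z.of_nat n) a) a); last first.
    by apply: ZZ_ext => i; rewrite !ffunE; lia.
  by rewrite hchi ?IH 1?cmulC //; apply: zsubgroup_scale.
have [n [->|->]] := Z_nat_cases c; first by rewrite cpowZ_nat.
rewrite (_ : scZZ _ a = oppZZ (scZZ (Z.of_nat n) a)); last by apply: ZZ_ext => i; rewrite !ffunE; lia.
by rewrite cpowZ_oppnat zcharN ?nat_scale //; apply: zsubgroup_scale.
Qed.
End Char.

Lemma zsubgroup_line_index v :
  exists d : nat, forall j : Z, S (scZZ j v) <-> Z.divide (Z.of_nat d) j.
Proof.
have [h0 [hadd hopp]] := hS.
have scZZ_scZZ c d : scZZ c (scZZ d v) = scZZ (c * d) v.
  by apply: ZZ_ext => i; rewrite !ffunE; lia.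
case: (classic (exists n : nat, (0 < n)%N /\ S (scZZ (Z.of_nat n) v))) => [hex|hno].
- have [d [[[hd0 hdS] hmin] _]] := Wf_nat.dec_inh_nat_subset_has_unique_least_element
    _ (fun n => classic _) hex.
  exists d => j; split => [hj|[c ->]]; last by rewrite -scZZ_scZZ; apply: zsubgroup_scale.
  have hdz : (0 < Z.of_nat d)%Z by move/ltP: hd0; lia.
  have [hr1 hr2] := Z.mod_pos_bound j (Z.of_nat d) hdz.
  have ej := Z.div_mod j (Z.of_nat d) ltac:(lia).
  set q := (j / Z.of_nat d)%Z in ej hr1 hr2; set r := (j mod Z.of_nat d)%Z in ej hr1 hr2.
  have hrS : S (scZZ r v).
    rewrite (_ : scZZ r v = addZZ (scZZ j v) (oppZZ (scZZ q (scZZ (Z.of_nat d) v)))).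
      by apply/hadd/hopp/zsubgroup_scale.
    by apply: ZZ_ext => i; rewrite !ffunE {1}ej; lia.
  case: (Z.eq_dec r 0) => hr0; first by exists q; lia.
  have : (d <= Z.to_nat r)%coq_nat by apply: hmin; rewrite Z2Nat.id; [split => //; apply/ltP|]; lia.
  lia.
- exists 0%N => j; split => [hj|[c ->]]; last first.
    by rewrite (_ : scZZ _ v = zeroZZ k) //; apply: ZZ_ext => i; rewrite !ffunE; lia.
  exists 0%Z; case: (Z.eq_dec j 0) => hj0; first lia.
  exfalso; apply: hno; exists (Z.abs_nat j); split; first by apply/ltP; lia.
  case: (Z_lt_le_dec 0 j) => hjp.
    by rewrite (_ : Z.of_nat _ = j) //; lia.
  rewrite (_ : scZZ _ v = oppZZ (scZZ j v)); first exact: hopp.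
  by apply: ZZ_ext => i; rewrite !ffunE; lia.
Qed.

Definition zline_ext (v u : ZZ k) :=
  exists p : ZZ k * Z, S p.1 /\ u = addZZ p.1 (scZZ p.2 v).

Lemma zsubgroup_line_ext v : zsubgroup (zline_ext v).
Proof.
have [h0 [hadd hopp]] := hS; split; [|split].
- by exists (zeroZZ k, 0%Z); split => //; apply: ZZ_ext => i; rewrite !ffunE /=; lia.
- move=> _ _ [[s1 j1] [/= h1 ->]] [[s2 j2] [/= h2 ->]].
  exists (addZZ s1 s2, (j1 + j2)%Z); split; first exact: hadd.
  by apply: ZZ_ext => i; rewrite !ffunE /=; lia.
- move=> _ [[s1 j1] [/= h1 ->]]; exists (oppZZ s1, (- j1)%Z); split; first exact: hopp.
  by apply: ZZ_ext => i; rewrite !ffunE /=; lia.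
Qed.

Section LineExtension.
Variables (chi : ZZ k -> circ) (v : ZZ k) (d : nat) (t : circ).
Hypothesis hchi : zchar S chi.
Hypothesis hd : forall j, S (scZZ j v) <-> Z.divide (Z.of_nat d) j.
Hypothesis ht : cpowZ t (Z.of_nat d) = chi (scZZ (Z.of_nat d) v).

Lemma line_ext_wd s s' j j' : S s -> S s' ->
  addZZ s (scZZ j v) = addZZ s' (scZZ j' v) ->
  cmul (chi s) (cpowZ t j) = cmul (chi s') (cpowZ t j').
Proof.
have [_ [hadd hopp]] := hS; move=> hs hs' e.
have e2 : scZZ (j - j') v = addZZ s' (oppZZ s).
  apply: ZZ_ext => i; have := congr1 (fun f : ZZ k => f i) e; rewrite !ffunE /=; nia.
have [c hc] : Z.divide (Z.of_nat d) (j - j') by apply/hd; rewrite e2; apply/hadd/hopp.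
have e3 : s' = addZZ s (scZZ c (scZZ (Z.of_nat d) v)).
  apply: ZZ_ext => i; have := congr1 (fun f : ZZ k => f i) e2; rewrite !ffunE /= hc; nia.
have hdv : S (scZZ (Z.of_nat d) v) by apply/hd; exists 1%Z; lia.
rewrite e3 (hchi hs (zsubgroup_scale c hdv)) (zchar_scale hchi c hdv) -ht cpowZM -cmulA -cpowZD.
by congr (cmul _ (cpowZ t _)); lia.
Qed.

Definition line_ext_char (u : ZZ k) : circ :=
  match excluded_middle_informative (zline_ext v u) with
  | left h => let p := proj1_sig (constructive_indefinite_description _ h) in
              cmul (chi p.1) (cpowZ t p.2)
  | right _ => cone
  end.

Lemma line_ext_charE s j : S s -> line_ext_char (addZZ s (scZZ j v)) = cmul (chi s) (cpowZ t j).
Proof.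
move=> hs; rewrite /line_ext_char; case: excluded_middle_informative => [h|h]; last first.
  by exfalso; apply: h; exists (s, j).
by case: constructive_indefinite_description => [[s1 j1] [/= h1 e1]] /=; apply: line_ext_wd.
Qed.

Lemma zchar_line_ext_char : zchar (zline_ext v) line_ext_char.
Proof.
have [_ [hadd _]] := hS.
move=> _ _ [[s1 j1] [/= h1 ->]] [[s2 j2] [/= h2 ->]].
rewrite (_ : addZZ _ _ = addZZ (addZZ s1 s2) (scZZ (j1 + j2) v)); last first.
  by apply: ZZ_ext => i; rewrite !ffunE /=; lia.
by rewrite (line_ext_charE _ (hadd _ _ h1 h2)) !line_ext_charE // (hchi h1 h2) cpowZD cmulACA.
Qed.

Lemma line_ext_char_ext s : S s -> line_ext_char s = chi s.
Proof.
move=> hs; rewrite -{1}(_ : addZZ s (scZZ 0 v) = s); last by apply: ZZ_ext => i; rewrite !ffunE /=; lia.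
by rewrite line_ext_charE // cmul1r.
Qed.
End LineExtension.

Lemma zchar_line_ext chi v : zchar S chi ->
  exists chi', zchar (zline_ext v) chi' /\ forall s, S s -> chi' s = chi s.
Proof.
move=> hchi; have [d hd] := zsubgroup_line_index v.
have [t ht] : exists t, cpowZ t (Z.of_nat d) = chi (scZZ (Z.of_nat d) v).
  case: d hd => [|d] hd.
    by exists cone; rewrite (_ : scZZ _ v = zeroZZ k) ?(zchar0 hchi) //.
  have [t ht] := cpowN_surj (chi (scZZ (Z.of_nat d.+1) v)) (ltn0Sn d).
  by exists t; rewrite cpowZ_nat.
exists (line_ext_char chi v t); split; first exact: zchar_line_ext_char hd ht.
exact: line_ext_char_ext hd ht.
Qed.
End Subgroup.

Definition unitZZ (i : 'I_k) : ZZ k := [ffun i' => if i' == i then 1%Z else 0%Z].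

Lemma zchar_extend_units S chi : zsubgroup S -> zchar S chi -> forall j, (j <= k)%N ->
  exists S' chi', [/\ zsubgroup S', zchar S' chi',
    forall s, S s -> S' s /\ chi' s = chi s & forall i : 'I_k, (i < j)%N -> S' (unitZZ i)].
Proof.
move=> hS hchi; elim=> [|j IH] hj; first by exists S, chi; split.
have [S' [chi' [hS' hchi' hsub hunit]]] := IH (ltnW hj).
have [chi'' [hchi'' hagree]] := zchar_line_ext hS' (unitZZ (Ordinal hj)) hchi'.
have hS'ext s : S' s -> zline_ext S' (unitZZ (Ordinal hj)) s.
  by move=> hs; exists (s, 0%Z); split => //; apply: ZZ_ext => i; rewrite !ffunE /=; lia.
exists (zline_ext S' (unitZZ (Ordinal hj))), chi''; split.
- exact: zsubgroup_line_ext.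
- exact: hchi''.
- by move=> s /hsub [h1 h2]; split; [apply: hS'ext | rewrite hagree].
- move=> i; rewrite ltnS leq_eqVlt => /orP [/eqP hi|hi]; last exact/hS'ext/hunit.
  exists (zeroZZ k, 1%Z); split; first by case: hS'.
  have -> : i = Ordinal hj by apply: val_inj.
  by apply: ZZ_ext => i'; rewrite !ffunE /=; case: (_ == _).
Qed.

Lemma zpow_scale_unit (z : torus k) (i : 'I_k) c : zpow z (scZZ c (unitZZ i)) = cpowZ (z i) c.
Proof.
rewrite /zpow (bigD1 i) //= big1 ?cmul1r; first by rewrite !ffunE eqxx Z.mul_1_r.
by move=> i' hi'; rewrite !ffunE (negbTE hi') Z.mul_0_r.
Qed.

Lemma zchar_zpow S chi : zsubgroup S -> zchar S chi ->
  exists z : torus k, forall l, S l -> chi l = zpow z l.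
Proof.
move=> hS hchi.
have [S' [chi' [hS' hchi' hsub hunit]]] := zchar_extend_units hS hchi (leqnn k).
exists (fun i => chi' (unitZZ i)) => l hl; have [_ <-] := hsub l hl.
pose trunc (j : nat) : ZZ k := [ffun i : 'I_k => if (i < j)%N then l i else 0%Z].
have trunc_zpow j : (j <= k)%N ->
    S' (trunc j) /\ chi' (trunc j) = zpow (fun i => chi' (unitZZ i)) (trunc j).
  elim: j => [|j IH] hj.
    rewrite (_ : trunc 0%N = zeroZZ k); last by apply: ZZ_ext => i; rewrite !ffunE.
    by rewrite zpow0 (zchar0 hS' hchi'); case: hS'.
  have [IH1 IH2] := IH (ltnW hj).
  have [_ [hadd _]] := hS'.
  have hunit_j := zsubgroup_scale hS' (l (Ordinal hj)) (hunit (Ordinal hj) hj).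
  rewrite (_ : trunc j.+1 = addZZ (trunc j) (scZZ (l (Ordinal hj)) (unitZZ (Ordinal hj)))).
    split; first exact: hadd.
    rewrite (hchi' _ _ IH1 hunit_j) zpowD IH2 (zchar_scale hS' hchi' _ (hunit (Ordinal hj) hj)).
    by rewrite zpow_scale_unit.
  apply: ZZ_ext => i; rewrite !ffunE ltnS leq_eqVlt.
  case: (eqVneq i (Ordinal hj)) => [->|hne] /=; first by rewrite eqxx ltnn /=; lia.
  have -> : (nat_of_ord i == j) = false.
    by apply/negbTE; apply: contra hne => /eqP h; apply/eqP/val_inj.
  by case: (i < j)%N => /=; lia.
rewrite (_ : l = trunc k); last by apply: ZZ_ext => i; rewrite !ffunE ltn_ord.
by case: (trunc_zpow k (leqnn k)).
Qed.
End CharExtension.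
(** * The monoid N^k *)

Section NNArith.
Variable k : nat.

Lemma NN_ext (a b : NN k) : (forall i, a i = b i) -> a = b.
Proof. by move=> h; apply/ffunP. Qed.

Definition subNN (m n : NN k) : NN k := [ffun i => (m i - n i)%N].
Definition constNN (j : nat) : NN k := [ffun _ => j].
Definition maxNN (a b : NN k) : NN k := [ffun i => maxn (a i) (b i)].
Definition max_coord (q : NN k) : nat := \max_(i < k) q i.

Lemma leNNP (m n : NN k) : leNN m n <-> forall i, (m i <= n i)%N.
Proof. by split => [/forallP | h]; last apply/forallP. Qed.

Lemma leNN_trans (a b c : NN k) : leNN a b -> leNN b c -> leNN a c.
Proof. by move=> /leNNP h1 /leNNP h2; apply/leNNP => i; apply: leq_trans (h1 i) (h2 i). Qed.
Lemma leNN_addr (a b : NN k) : leNN a (addNN a b).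
Proof. by apply/leNNP => i; rewrite ffunE leq_addr. Qed.
Lemma leNN_addl (a b : NN k) : leNN a (addNN b a).
Proof. by apply/leNNP => i; rewrite ffunE leq_addl. Qed.
Lemma leNN_const (a b : nat) : (a <= b)%N -> leNN (constNN a) (constNN b).
Proof. by move=> h; apply/leNNP => i; rewrite !ffunE. Qed.
Lemma leNN_max_coord (q : NN k) : leNN q (constNN (max_coord q)).
Proof. by apply/leNNP => i; rewrite ffunE; apply: leq_bigmax. Qed.
Lemma le_maxNNl (a b : NN k) : leNN a (maxNN a b).
Proof. by apply/leNNP => i; rewrite ffunE leq_maxl. Qed.
Lemma le_maxNNr (a b : NN k) : leNN b (maxNN a b).
Proof. by apply/leNNP => i; rewrite ffunE leq_maxr. Qed.

Lemma addNNA (a b c : NN k) : addNN a (addNN b c) = addNN (addNN a b) c.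
Proof. by apply: NN_ext => i; rewrite !ffunE addnA. Qed.
Lemma addNNC (a b : NN k) : addNN a b = addNN b a.
Proof. by apply: NN_ext => i; rewrite !ffunE addnC. Qed.
Lemma add0NN (a : NN k) : addNN (zeroNN k) a = a.
Proof. by apply: NN_ext => i; rewrite !ffunE. Qed.
Lemma addNN0 (a : NN k) : addNN a (zeroNN k) = a.
Proof. by apply: NN_ext => i; rewrite !ffunE addn0. Qed.
Lemma subNN0 (a : NN k) : subNN a (zeroNN k) = a.
Proof. by apply: NN_ext => i; rewrite !ffunE subn0. Qed.
Lemma subNNKC (a b : NN k) : leNN a b -> addNN a (subNN b a) = b.
Proof. by move/leNNP=> h; apply: NN_ext => i; rewrite !ffunE subnKC. Qed.
Lemma addKNN (a b : NN k) : subNN (addNN a b) a = b.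
Proof. by apply: NN_ext => i; rewrite !ffunE addKn. Qed.
Lemma constNN0 : constNN 0 = zeroNN k.
Proof. by apply: NN_ext => i; rewrite !ffunE. Qed.
End NNArith.

(** * Factorisation in a k-graph *)

Section Factorisation.
Variables (k : nat) (L : kgraph k).
Local Notation mor := (kmor L).

Lemma kdeg_eq0 (l : mor) : kdeg l = zeroNN k -> l = kid (kcod l).
Proof.
move=> h; have e : kdeg l = addNN (zeroNN k) (zeroNN k) by rewrite h add0NN.
have [ab [_ U]] := kfact e.
have u1 := U (kid (kcod l), l) (conj (kid_dom _) (conj (kid_l l) (conj (kdeg_id _) h))).
have u2 := U (l, kid (kdom l)) (conj (esym (kid_cod _)) (conj (kid_r l) (conj h (kdeg_id _)))).
by rewrite u1 in u2; case: u2 => ->.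
Qed.

Lemma kfact_exists (l : mor) (m : NN k) : leNN m (kdeg l) ->
  exists ab : mor * mor, kdom ab.1 = kcod ab.2 /\ kcomp ab.1 ab.2 = l /\
    kdeg ab.1 = m /\ kdeg ab.2 = subNN (kdeg l) m.
Proof.
move=> h; have e : kdeg l = addNN m (subNN (kdeg l) m) by rewrite subNNKC.
by have [ab [H _]] := kfact e; exists ab.
Qed.

(* The factorisation l = (kpre l m) (ksuf l m) with d(kpre l m) = m; junk unless m <= d(l). *)
Definition kfactor (l : mor) (m : NN k) : mor * mor :=
  match @idP (leNN m (kdeg l)) with
  | ReflectT h => proj1_sig (constructive_indefinite_description _ (kfact_exists h))
  | ReflectF _ => (kid (kcod l), l)
  end.
Definition kpre l m := (kfactor l m).1.
Definition ksuf l m := (kfactor l m).2.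

Lemma kfactor_spec l m : leNN m (kdeg l) ->
  kdom (kpre l m) = kcod (ksuf l m) /\ kcomp (kpre l m) (ksuf l m) = l /\
  kdeg (kpre l m) = m /\ kdeg (ksuf l m) = subNN (kdeg l) m.
Proof.
move=> h; rewrite /kpre /ksuf /kfactor.
destruct (@idP (leNN m (kdeg l))) as [h'|h']; last by [].
by case: constructive_indefinite_description.
Qed.

Lemma kfactor_uniq l (a b : mor) : kdom a = kcod b -> kcomp a b = l ->
  kpre l (kdeg a) = a /\ ksuf l (kdeg a) = b.
Proof.
move=> hab hl; have hd : kdeg l = addNN (kdeg a) (kdeg b) by rewrite -hl kdeg_comp.
have [s1 [s2 [s3 s4]]] := @kfactor_spec l (kdeg a) ltac:(by rewrite hd leNN_addr).
have [ab [_ U]] := kfact hd.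
have ua := U (a, b) (conj hab (conj hl (conj erefl erefl))).
have ub := U (kpre l (kdeg a), ksuf l (kdeg a)) (conj s1 (conj s2 (conj s3 _))).
by rewrite s4 hd addKNN ua in ub; case: (ub erefl) => <- <-.
Qed.

Lemma kpre_deg l m : leNN m (kdeg l) -> kdeg (kpre l m) = m.
Proof. by move=> /kfactor_spec [_ [_ []]]. Qed.
Lemma ksuf_deg l m : leNN m (kdeg l) -> kdeg (ksuf l m) = subNN (kdeg l) m.
Proof. by move=> /kfactor_spec [_ [_ []]]. Qed.
Lemma ksuf_cod l m : leNN m (kdeg l) -> kcod (ksuf l m) = kdom (kpre l m).
Proof. by move=> /kfactor_spec []. Qed.
Lemma ksuf_dom l m : leNN m (kdeg l) -> kdom (ksuf l m) = kdom l.
Proof. by move=> /kfactor_spec [h1 [e _]]; rewrite -{2}e kcomp_dom. Qed.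

Lemma kpre_comp (a b : mor) : kdom a = kcod b -> kpre (kcomp a b) (kdeg a) = a.
Proof. by move=> h; have [] := kfactor_uniq h erefl. Qed.
Lemma ksuf_comp (a b : mor) : kdom a = kcod b -> ksuf (kcomp a b) (kdeg a) = b.
Proof. by move=> h; have [] := kfactor_uniq h erefl. Qed.

Lemma kpre_full l : kpre l (kdeg l) = l.
Proof. by have := @kpre_comp l (kid (kdom l)); rewrite kid_r kid_cod; apply. Qed.
Lemma ksuf0 l : ksuf l (zeroNN k) = l.
Proof. by have := @ksuf_comp (kid (kcod l)) l; rewrite kid_l kdeg_id kid_dom; apply. Qed.

Lemma kpre_kpre l m m' : leNN m' m -> leNN m (kdeg l) ->
  kpre (kpre l m) m' = kpre l m' /\ ksuf l m' = kcomp (ksuf (kpre l m) m') (ksuf l m).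
Proof.
move=> h1 h2; have [s1 [s2 [s3 s4]]] := kfactor_spec h2.
have [t1 [t2 [t3 t4]]] := @kfactor_spec (kpre l m) m' ltac:(by rewrite s3).
have e : kcomp (kpre (kpre l m) m') (kcomp (ksuf (kpre l m) m') (ksuf l m)) = l.
  by rewrite kassoc ?t2 ?s2 ?ksuf_dom ?s3.
have hd : kdom (ksuf (kpre l m) m') = kcod (ksuf l m) by rewrite ksuf_dom ?s3.
have [] := kfactor_uniq (etrans t1 (esym (kcomp_cod hd))) e.
by rewrite t3 => -> ->.
Qed.

Lemma ksuf_split l p q : leNN p q -> leNN q (kdeg l) ->
  ksuf l p = kcomp (ksuf (kpre l q) p) (ksuf l q).
Proof. by move=> h1 h2; have [] := kpre_kpre h1 h2. Qed.
End Factorisation.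

(** * Infinite paths *)

Section Paths.
Variables (k : nat) (L : kgraph k).
Local Notation mor := (kmor L).
Local Notation O0 := (zeroNN k).

(* x(p,q), made total by a junk value when p is not below q. *)
Definition seg (x : ipath L) p q : mor :=
  match @idP (leNN p q) with ReflectT h => pm x h | ReflectF _ => kid (pv x p) end.

Lemma seg_pm x p q (h : leNN p q) : seg x p q = pm x h.
Proof. by rewrite /seg; destruct (@idP (leNN p q)) as [h'|h']; rewrite ?(bool_irrelevance h h'). Qed.

Lemma seg_cod x p q : leNN p q -> kcod (seg x p q) = pv x p.
Proof. by move=> h; rewrite (seg_pm x h) pm_cod. Qed.
Lemma seg_dom x p q : leNN p q -> kdom (seg x p q) = pv x q.
Proof. by move=> h; rewrite (seg_pm x h) pm_dom. Qed.
Lemma seg_id x p : seg x p p = kid (pv x p).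
Proof. by rewrite (seg_pm x (leNN_refl p)) pm_id. Qed.
Lemma seg_comp x p q r : leNN p q -> leNN q r -> kcomp (seg x p q) (seg x q r) = seg x p r.
Proof. by move=> h1 h2; rewrite (seg_pm x h1) (seg_pm x h2) (seg_pm x (leNN_trans h1 h2)); apply: pm_comp. Qed.
Lemma seg_deg x p q : leNN p q -> kdeg (seg x p q) = subNN q p.
Proof. by move=> h; apply: NN_ext => i; rewrite (seg_pm x h) pm_deg ffunE. Qed.
Lemma kdeg_seg0 x n : kdeg (seg x O0 n) = n.
Proof. by rewrite seg_deg ?le0NN // subNN0. Qed.
Lemma seg0E x n : seg0 x n = seg x O0 n.
Proof. by rewrite /seg0 (seg_pm x (le0NN n)). Qed.
Lemma pv_seg0 x q : pv x q = kdom (seg x O0 q).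
Proof. by rewrite seg_dom // le0NN. Qed.
Lemma pv0_seg0 x q : pv x O0 = kcod (seg x O0 q).
Proof. by rewrite seg_cod // le0NN. Qed.

Lemma seg_split x p q r : leNN p q -> leNN q r ->
  kpre (seg x p r) (subNN q p) = seg x p q /\ ksuf (seg x p r) (subNN q p) = seg x q r.
Proof.
move=> h1 h2; rewrite -(seg_deg x h1).
by apply: kfactor_uniq (seg_comp x h1 h2); rewrite seg_dom // seg_cod.
Qed.

Lemma seg0_split x p q : leNN p q ->
  kpre (seg x O0 q) p = seg x O0 p /\ ksuf (seg x O0 q) p = seg x p q.
Proof. by move=> h; have := seg_split x (le0NN p) h; rewrite subNN0. Qed.

Lemma seg_agree (x y : ipath L) N p q : seg x O0 N = seg y O0 N ->
  leNN p q -> leNN q N -> seg x p q = seg y p q.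
Proof.
move=> e h1 h2.
have eq : seg x O0 q = seg y O0 q by rewrite -(proj1 (seg0_split x h2)) e (proj1 (seg0_split y h2)).
by rewrite -(proj2 (seg0_split x h1)) -(proj2 (seg0_split y h1)) eq.
Qed.

Lemma seg0_agree_le (x y : ipath L) N M : seg x O0 N = seg y O0 N ->
  leNN M N -> seg x O0 M = seg y O0 M.
Proof. by move=> e; apply: seg_agree e (le0NN M). Qed.

Lemma cylE (l : mor) (y : ipath L) : cyl l y <-> seg y O0 (kdeg l) = l.
Proof. by rewrite /cyl seg0E. Qed.

Lemma cyl_seg (x y : ipath L) N : cyl (seg0 x N) y <-> seg y O0 N = seg x O0 N.
Proof. by rewrite cylE seg0E kdeg_seg0. Qed.

Lemma cyl_kid v (x : ipath L) : cyl (kid v) x <-> pv x O0 = v.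
Proof.
rewrite cylE kdeg_id seg_id; split => [h|->] //.
by rewrite -(kid_cod (pv x _)) h kid_cod.
Qed.

Definition tail_eq (m : NN k) (x : ipath L) (n : NN k) (y : ipath L) : Prop :=
  (forall p, pv x (addNN m p) = pv y (addNN n p)) /\
  (forall p q, leNN p q -> seg x (addNN m p) (addNN m q) = seg y (addNN n p) (addNN n q)).

Lemma shift_eqE m x n y : shift_eq m x n y <-> tail_eq m x n y.
Proof.
split => [[h1 h2]|[h1 h2]]; split => // p q h.
  by rewrite (seg_pm x (leNN_add2l m h)) (seg_pm y (leNN_add2l n h)).
by rewrite -(seg_pm x) -(seg_pm y); apply: h2.
Qed.

Lemma tail_eq_segs m x n y :
  (forall J, seg x m (addNN m J) = seg y n (addNN n J)) -> tail_eq m x n y.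
Proof.
move=> h.
have hseg p q : leNN p q -> seg x (addNN m p) (addNN m q) = seg y (addNN n p) (addNN n q).
  move=> hpq; have [_ <-] := seg_split x (leNN_addr m p) (leNN_add2l m hpq).
  by have [_ <-] := seg_split y (leNN_addr n p) (leNN_add2l n hpq); rewrite !addKNN h.
split => // p; have := hseg p p (leNN_refl p); rewrite !seg_id => e.
by rewrite -(kid_cod (pv x _)) e kid_cod.
Qed.

Lemma tail_eq_refl m x : tail_eq m x m x.
Proof. by []. Qed.
Lemma tail_eq_sym m x n y : tail_eq m x n y -> tail_eq n y m x.
Proof. by move=> [h1 h2]; split => *; [rewrite h1 | rewrite h2]. Qed.
Lemma tail_eq_trans a x b y c z : tail_eq a x b y -> tail_eq b y c z -> tail_eq a x c z.
Proof. by move=> [h1 h2] [g1 g2]; split => *; [rewrite h1 g1 | rewrite h2 ?g2]. Qed.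
Lemma tail_eq_add a x b y c : tail_eq a x b y -> tail_eq (addNN a c) x (addNN b c) y.
Proof.
move=> [h1 h2]; split => *; first by rewrite -!addNNA h1.
by rewrite -!addNNA h2 // leNN_add2l.
Qed.
Lemma tail_eq_seg (m p q n : NN k) (x y : ipath L) : tail_eq m x n y -> leNN p q ->
  seg x (addNN m p) (addNN m q) = seg y (addNN n p) (addNN n q).
Proof. by move=> [_ h] hpq; apply: h. Qed.

Lemma ipath_ext (x y : ipath L) : (forall p, pv x p = pv y p) ->
  (forall p q (h : leNN p q), pm x h = pm y h) -> x = y.
Proof.
case: x => pv1 pm1 a1 b1 c1 d1 e1; case: y => pv2 pm2 a2 b2 c2 d2 e2 /= h1 h2.
have E1 : pv1 = pv2 by apply: functional_extensionality.
subst pv2; have E2 : pm1 = pm2.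
  do 3!apply: functional_extensionality_dep => ?; exact: h2.
by subst pm2; f_equal; apply: proof_irrelevance.
Qed.

Lemma path_segs_eq (x y : ipath L) : (forall N, seg x O0 N = seg y O0 N) -> x = y.
Proof.
move=> h; have [h1 h2] : tail_eq O0 x O0 y by apply: tail_eq_segs => J; rewrite !add0NN.
apply: ipath_ext => [p|p q hpq]; first by have := h1 p; rewrite add0NN.
by have := h2 p q hpq; rewrite !add0NN !(seg_pm _ hpq).
Qed.

Lemma path_const_segs_eq (x y : ipath L) :
  (forall j, seg x O0 (constNN k j) = seg y O0 (constNN k j)) -> x = y.
Proof. by move=> h; apply: path_segs_eq => N; apply: seg0_agree_le (h _) (leNN_max_coord N). Qed.

Section Shift.
Variables (x : ipath L) (n : NN k).
Definition shift_pv p := pv x (addNN n p).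
Definition shift_pm p q (h : leNN p q) := pm x (leNN_add2l n h).
Lemma shift_pm_cod p q (h : leNN p q) : kcod (shift_pm h) = shift_pv p.
Proof. exact: pm_cod. Qed.
Lemma shift_pm_dom p q (h : leNN p q) : kdom (shift_pm h) = shift_pv q.
Proof. exact: pm_dom. Qed.
Lemma shift_pm_id p (h : leNN p p) : shift_pm h = kid (shift_pv p).
Proof. exact: pm_id. Qed.
Lemma shift_pm_comp p q r (h1 : leNN p q) (h2 : leNN q r) (h3 : leNN p r) :
  kcomp (shift_pm h1) (shift_pm h2) = shift_pm h3.
Proof. exact: pm_comp. Qed.
Lemma shift_pm_deg p q (h : leNN p q) i : kdeg (shift_pm h) i = (q i - p i)%N.
Proof. by rewrite /shift_pm pm_deg !ffunE subnDl. Qed.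
Definition shift_path : ipath L :=
  IPath shift_pm_cod shift_pm_dom shift_pm_id shift_pm_comp shift_pm_deg.
End Shift.

Lemma pv_shift_path0 x n : pv (shift_path x n) O0 = pv x n.
Proof. by rewrite /= /shift_pv addNN0. Qed.

Lemma seg_shift x n p q : leNN p q -> seg (shift_path x n) p q = seg x (addNN n p) (addNN n q).
Proof. by move=> h; rewrite (seg_pm _ h) (seg_pm x (leNN_add2l n h)). Qed.

Lemma tail_eq_shift x n : tail_eq n x O0 (shift_path x n).
Proof. by split => p *; rewrite !add0NN ?seg_shift. Qed.

Section Chain.
Variables (mu : nat -> mor) (D0 : NN k).
Hypothesis hdeg : forall j, kdeg (mu j) = addNN D0 (constNN k j).
Hypothesis hcoh : forall j, kpre (mu j.+1) (kdeg (mu j)) = mu j.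

Lemma kdeg_chain_mono j j' : (j <= j')%N -> leNN (kdeg (mu j)) (kdeg (mu j')).
Proof. by move=> h; rewrite !hdeg; apply/leNNP => i; rewrite !ffunE leq_add2l. Qed.

Lemma kpre_chain j j' : (j <= j')%N -> kpre (mu j') (kdeg (mu j)) = mu j.
Proof.
move=> h; rewrite -(subnK h); elim: (j' - j)%N => [|n IH] /=; first by rewrite kpre_full.
rewrite addSn -{2}IH -(hcoh (n + j)); symmetry; apply: (proj1 (kpre_kpre _ _)).
  by apply: kdeg_chain_mono; rewrite leq_addl.
exact: kdeg_chain_mono.
Qed.

Lemma le_kdeg_chain q : leNN q (kdeg (mu (max_coord q))).
Proof. by rewrite hdeg; apply: leNN_trans (leNN_max_coord q) (leNN_addl _ _). Qed.

Definition chain_seg q := kpre (mu (max_coord q)) q.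

Lemma kpre_chainE j q : leNN q (kdeg (mu j)) -> kpre (mu j) q = chain_seg q.
Proof.
move=> h; rewrite /chain_seg; set j' := maxn j (max_coord q).
have e1 : kpre (mu j') q = kpre (mu j) q.
  rewrite -(kpre_chain (leq_maxl j (max_coord q))); symmetry.
  by apply: (proj1 (kpre_kpre _ _)) => //; apply: kdeg_chain_mono; rewrite leq_maxl.
have e2 : kpre (mu j') q = kpre (mu (max_coord q)) q.
  rewrite -(kpre_chain (leq_maxr j (max_coord q))); symmetry.
  by apply: (proj1 (kpre_kpre (le_kdeg_chain q) _)); apply: kdeg_chain_mono; rewrite leq_maxr.
by rewrite -e1 e2.
Qed.

Lemma kdeg_chain_seg q : kdeg (chain_seg q) = q.
Proof. by rewrite /chain_seg kpre_deg // le_kdeg_chain. Qed.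

Lemma kpre_chain_seg p q : leNN p q -> kpre (chain_seg q) p = chain_seg p.
Proof.
move=> h; rewrite /chain_seg (proj1 (kpre_kpre h (le_kdeg_chain q))).
exact/kpre_chainE/(leNN_trans h (le_kdeg_chain q)).
Qed.

Definition chain_pv p := kdom (chain_seg p).
Definition chain_pm p q (h : leNN p q) := ksuf (chain_seg q) p.
Lemma le_kdeg_chain_seg p q : leNN p q -> leNN p (kdeg (chain_seg q)).
Proof. by rewrite kdeg_chain_seg. Qed.
Lemma chain_pm_cod p q (h : leNN p q) : kcod (chain_pm h) = chain_pv p.
Proof. by rewrite /chain_pm ksuf_cod ?le_kdeg_chain_seg // kpre_chain_seg. Qed.
Lemma chain_pm_dom p q (h : leNN p q) : kdom (chain_pm h) = chain_pv q.
Proof. by rewrite /chain_pm ksuf_dom ?le_kdeg_chain_seg. Qed.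
Lemma chain_pm_id p (h : leNN p p) : chain_pm h = kid (chain_pv p).
Proof.
have hd : kdeg (chain_pm h) = zeroNN k.
  by rewrite /chain_pm ksuf_deg ?le_kdeg_chain_seg // kdeg_chain_seg; apply: NN_ext => i;
    rewrite !ffunE subnn.
by rewrite (kdeg_eq0 hd) (chain_pm_cod h).
Qed.
Lemma chain_pm_comp p q r (h1 : leNN p q) (h2 : leNN q r) (h3 : leNN p r) :
  kcomp (chain_pm h1) (chain_pm h2) = chain_pm h3.
Proof. by rewrite /chain_pm (ksuf_split h1 (le_kdeg_chain_seg h2)) kpre_chain_seg. Qed.
Lemma chain_pm_deg p q (h : leNN p q) i : kdeg (chain_pm h) i = (q i - p i)%N.
Proof. by rewrite /chain_pm ksuf_deg ?le_kdeg_chain_seg // kdeg_chain_seg ffunE. Qed.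

Definition chain_path : ipath L :=
  IPath chain_pm_cod chain_pm_dom chain_pm_id chain_pm_comp chain_pm_deg.

Lemma seg_chain_path j : seg chain_path O0 (kdeg (mu j)) = mu j.
Proof.
rewrite (seg_pm _ (le0NN _)) /= /chain_pm ksuf0.
by rewrite -(kpre_chainE (leNN_refl _)) kpre_full.
Qed.
End Chain.

Lemma path_of_chain (mu : nat -> mor) (D0 : NN k) :
  (forall j, kdeg (mu j) = addNN D0 (constNN k j)) ->
  (forall j, exists e, kdom (mu j) = kcod e /\ mu j.+1 = kcomp (mu j) e) ->
  exists y : ipath L, forall j, seg y O0 (kdeg (mu j)) = mu j.
Proof.
move=> hd hc; have hcoh j : kpre (mu j.+1) (kdeg (mu j)) = mu j.
  by have [e [h1 ->]] := hc j; rewrite kpre_comp.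
by exists (chain_path hd hcoh); apply: seg_chain_path.
Qed.

Lemma dependent_choice (A : Type) (P : A -> Prop) (R : A -> A -> Prop) (a0 : A) :
  P a0 -> (forall a, P a -> exists b, P b /\ R a b) ->
  exists f : nat -> A, f 0%N = a0 /\ forall n, P (f n) /\ R (f n) (f n.+1).
Proof.
move=> h0 hs.
pose step (a : {a : A | P a}) : {a : A | P a} :=
  let e := constructive_indefinite_description _ (hs _ (proj2_sig a)) in
  exist _ (proj1_sig e) (proj1 (proj2_sig e)).
have stepR a : R (proj1_sig a) (proj1_sig (step a)).
  by rewrite /step /=; case: constructive_indefinite_description => b [].
exists (fun n => proj1_sig (iter n step (exist _ a0 h0))); split => // n.
by split; [case: (iter n step _) | rewrite iterS; apply: stepR].
Qed.

Lemma path_of_extensible (P : mor -> Prop) (lam : mor) : P lam ->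
  (forall mu, P mu -> exists e, kdom mu = kcod e /\ kdeg e = constNN k 1 /\ P (kcomp mu e)) ->
  exists y : ipath L, cyl lam y /\ forall j, P (seg y O0 (addNN (kdeg lam) (constNN k j))).
Proof.
move=> h0 hstep.
pose R (mu mu' : mor) := exists e, kdom mu = kcod e /\ mu' = kcomp mu e /\ kdeg e = constNN k 1.
have [f [f0 hf]] : exists f : nat -> mor, f 0%N = lam /\ forall n, P (f n) /\ R (f n) (f n.+1).
  apply: dependent_choice h0 _ => mu /hstep [e [h1 [h2 h3]]].
  by exists (kcomp mu e); split => //; exists e.
have hdeg j : kdeg (f j) = addNN (kdeg lam) (constNN k j).
  elim: j => [|j IH]; first by rewrite f0 constNN0 addNN0.
  have [_ [e [h1 [-> h3]]]] := hf j; rewrite kdeg_comp // IH h3.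
  by apply: NN_ext => i; rewrite !ffunE; lia.
have [y hy] : exists y : ipath L, forall j, seg y O0 (kdeg (f j)) = f j.
  by apply: path_of_chain hdeg _ => j; have [_ [e [h1 [h2 _]]]] := hf j; exists e.
exists y; split; first by apply/cylE; rewrite -f0 hy.
by move=> j; rewrite -hdeg hy; case: (hf j).
Qed.

Lemma path_concat (l : mor) (x : ipath L) : kdom l = pv x O0 ->
  exists y : ipath L, seg y O0 (kdeg l) = l /\ tail_eq (kdeg l) y O0 x.
Proof.
move=> hl; pose mu j := kcomp l (seg x O0 (constNN k j)).
have hdx j : kdom l = kcod (seg x O0 (constNN k j)) by rewrite seg_cod ?le0NN.
have hdeg j : kdeg (mu j) = addNN (kdeg l) (constNN k j) by rewrite /mu kdeg_comp // kdeg_seg0.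
have hc j : exists e, kdom (mu j) = kcod e /\ mu j.+1 = kcomp (mu j) e.
  have hj : leNN (constNN k j) (constNN k j.+1) by apply: leNN_const.
  exists (seg x (constNN k j) (constNN k j.+1)); split.
    by rewrite /mu kcomp_dom // seg_dom ?le0NN // seg_cod.
  by rewrite /mu -kassoc ?seg_comp ?le0NN // seg_dom ?le0NN // seg_cod.
have [y hy] := path_of_chain hdeg hc.
have key J : seg y O0 (addNN (kdeg l) J) = kcomp l (seg x O0 J).
  have hJ := leNN_max_coord J; set j := max_coord J in hJ.
  have [<- _] := seg0_split y (leNN_add2l (kdeg l) hJ).
  rewrite -hdeg hy /mu -(seg_comp x (le0NN J) hJ).
  have d1 : kdom l = kcod (seg x O0 J) by rewrite seg_cod ?le0NN.
  have d2 : kdom (seg x O0 J) = kcod (seg x J (constNN k j)) by rewrite seg_dom ?le0NN // seg_cod.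
  have d3 : kdom (kcomp l (seg x O0 J)) = kcod (seg x J (constNN k j)) by rewrite kcomp_dom.
  by have := kpre_comp d3; rewrite kdeg_comp // kdeg_seg0 -kassoc.
exists y; split; first by have := key O0; rewrite addNN0 seg_id -hl kid_r.
apply: tail_eq_segs => J; rewrite add0NN.
have [_ <-] := seg0_split y (leNN_addr (kdeg l) J).
by rewrite key ksuf_comp // seg_cod ?le0NN.
Qed.
End Paths.

(** * The isotropy groups and the map q *)

Section Isotropy.
Variables (k : nat) (L : kgraph k).

Lemma isoLE (x : ipath L) l : isoL x l <-> exists m n, l = diffNN m n /\ tail_eq m x n x.
Proof.
by split => [[m [n [h1 /shift_eqE h2]]] | [m [n [h1 /shift_eqE h2]]]]; exists m, n.
Qed.

Lemma diffNN_add (a b c d : NN k) :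
  diffNN (addNN a c) (addNN b d) = addZZ (diffNN a b) (diffNN c d).
Proof. by apply: ZZ_ext => i; rewrite !ffunE; lia. Qed.

Lemma diffNN_addl (c a b : NN k) : diffNN (addNN c a) (addNN c b) = diffNN a b.
Proof. by apply: ZZ_ext => i; rewrite !ffunE; lia. Qed.

Lemma isoL_zsubgroup (x : ipath L) : zsubgroup (isoL x).
Proof.
split; [|split].
- apply/isoLE; exists (zeroNN k), (zeroNN k); split; last exact: tail_eq_refl.
  by apply: ZZ_ext => i; rewrite !ffunE.
- move=> a b /isoLE [m1 [n1 [-> h1]]] /isoLE [m2 [n2 [-> h2]]].
  apply/isoLE; exists (addNN m1 m2), (addNN n1 n2); split; first by rewrite diffNN_add.
  apply: (tail_eq_trans (tail_eq_add m2 h1)); rewrite (addNNC n1 m2) (addNNC n1 n2).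
  exact: tail_eq_add n1 h2.
- move=> a /isoLE [m1 [n1 [-> h1]]]; apply/isoLE; exists n1, m1; split; last exact: tail_eq_sym.
  by apply: ZZ_ext => i; rewrite !ffunE; lia.
Qed.

Lemma isoL_tail_eq m (x : ipath L) n y l : tail_eq m x n y -> isoL x l -> isoL y l.
Proof.
move=> h /isoLE [a [b [-> hab]]]; apply/isoLE; exists (addNN n a), (addNN n b); split.
  by apply: ZZ_ext => i; rewrite !ffunE; lia.
have s1 : tail_eq (addNN n a) y (addNN m a) x by apply/tail_eq_add/tail_eq_sym.
have s2 : tail_eq (addNN m a) x (addNN m b) x by rewrite !(addNNC m); apply: tail_eq_add.
have s3 : tail_eq (addNN m b) x (addNN n b) y by apply: tail_eq_add.
exact: tail_eq_trans s1 (tail_eq_trans s2 s3).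
Qed.

Definition qchar (x : ipath L) (z : torus k) (l : ZZ k) : circ :=
  if excluded_middle_informative (isoL x l) then zpow z l else cone.

Lemma qcharE (x : ipath L) z l : isoL x l -> qchar x z l = zpow z l.
Proof. by rewrite /qchar; case: excluded_middle_informative. Qed.

Lemma qchar_out (x : ipath L) z l : ~ isoL x l -> qchar x z l = cone.
Proof. by rewrite /qchar; case: excluded_middle_informative. Qed.

Lemma qchar_is_char x z : is_char x (qchar x z).
Proof.
have [_ [hadd _]] := isoL_zsubgroup x; split; last exact: qchar_out.
by move=> l1 l2 h1 h2; rewrite (qcharE _ (hadd _ _ h1 h2)) !qcharE // zpowD.
Qed.

Definition qstab (x : ipath L) (z : torus k) : stab L := Stab (qchar_is_char x z).

Lemma q_rel_qstab x z : q_rel x z (qstab x z).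
Proof. by split => // l hl; rewrite /= qcharE. Qed.

Lemma stab_eq (s s' : stab L) : sx s = sx s' ->
  (forall l, isoL (sx s) l -> schi s l = schi s' l) -> s = s'.
Proof.
case: s => x chi ok; case: s' => x' chi' ok' /= e h; subst x'.
have E : chi = chi'.
  apply: functional_extensionality => l; case: (classic (isoL x l)) => hl; first exact: h.
  by rewrite (proj2 ok l hl) (proj2 ok' l hl).
by subst chi'; f_equal; apply: proof_irrelevance.
Qed.

Lemma q_rel_qstabE x z s : q_rel x z s -> s = qstab x z.
Proof. by move=> [e h]; apply: stab_eq => //= l; rewrite e => hl; rewrite h // qcharE. Qed.

Lemma q_preimageE (U : stab L -> Prop) x z : q_preimage U x z <-> U (qstab x z).
Proof.
split; first by move=> [s [/q_rel_qstabE <-]].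
by move=> h; exists (qstab x z); split => //; apply: q_rel_qstab.
Qed.

Lemma stab_qstab (s : stab L) : exists z, s = qstab (sx s) z.
Proof.
have hchi : zchar (isoL (sx s)) (schi s) by move=> a b ha hb; apply: (proj1 (schi_ok s)).
have [z hz] := zchar_zpow (isoL_zsubgroup (sx s)) hchi.
by exists z; apply: q_rel_qstabE.
Qed.

Lemma q_preimage_tail_eq (U : stab L -> Prop) m x n y z : G_invariant U -> tail_eq m x n y ->
  q_preimage U y z -> q_preimage U x z.
Proof.
move=> hU hse; rewrite !q_preimageE => hy.
have hg : inG (GEl x (diffNN m n) y) by exists m, n; split => //; apply/shift_eqE.
apply: (hU _ _ _ hg _ hy); split => //; split => // l hl /=.
have -> : addZZ (addZZ (oppZZ (diffNN m n)) l) (diffNN m n) = l.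
  by apply: ZZ_ext => i; rewrite !ffunE; lia.
by rewrite !qcharE //; apply: isoL_tail_eq hse hl.
Qed.
End Isotropy.

(** * Neighbourhoods of infinite paths *)

Section Topology.
Variables (k : nat) (L : kgraph k).
Local Notation mor := (kmor L).
Local Notation O0 := (zeroNN k).
Local Notation cst := (constNN k).

(* The cylinder sets Z(x(0,(j,...,j))) form a neighbourhood basis at x. *)
Definition near (x : ipath L) (j : nat) (y : ipath L) := seg y O0 (cst j) = seg x O0 (cst j).

Lemma near_mono x j j' y : (j <= j')%N -> near x j' y -> near x j y.
Proof. by rewrite /near => h e; apply: seg0_agree_le e (leNN_const _ h). Qed.

Lemma near_all (A : Type) (bs : list A) (P : A -> ipath L -> Prop) (x : ipath L) :
  (forall b, List.In b bs -> exists j, forall y, near x j y -> P b y) ->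
  exists j, forall y, near x j y -> forall b, List.In b bs -> P b y.
Proof.
elim: bs => [|b bs IH] h; first by exists 0%N.
have [j1 h1] := h b (or_introl erefl).
have [j2 h2] := IH (fun b' hb' => h b' (or_intror hb')).
exists (maxn j1 j2) => y hy b' [<-|hb'].
  by apply: h1; apply: near_mono hy; apply: leq_maxl.
by apply: h2 => //; apply: near_mono hy; apply: leq_maxr.
Qed.

Lemma open_path_near (U : ipath L -> Prop) x : open_path U -> U x ->
  exists j, forall y, near x j y -> U y.
Proof.
move=> hU hx; have [l [/cylE hl hall]] := hU x hx.
exists (max_coord (kdeg l)) => y hy; apply/hall/cylE; apply: etrans hl.
exact: seg0_agree_le hy (leNN_max_coord _).
Qed.

Lemma open_not_near x j : open_path (fun y => ~ near x j y).
Proof.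
move=> y hy; exists (seg0 y (cst j)); split; first exact/cyl_seg.
by move=> y' /cyl_seg h; rewrite /near h.
Qed.

Lemma open_pathT : open_path (fun _ : ipath L => True).
Proof. by move=> y _; exists (kid (pv y O0)); split => //; apply/cyl_kid. Qed.

Lemma open_cyl (l : mor) : open_path (cyl l).
Proof. by move=> y hy; exists l. Qed.

Lemma open_G_basic (U : ipath L -> Prop) (W : gel L -> Prop) : open_path U ->
  (forall g, W g -> inG g /\ U (grng g)) ->
  (forall g g', W g -> inG g' -> U (grng g') -> glab g' = glab g -> W g') -> open_G W.
Proof.
move=> hU hWU hW g hg; have [[m [n [hl hs]]] hUg] := hWU g hg.
exists U, m, n, (fun _ => True); split => //; split; first exact: open_pathT.
split; first by [].
by move=> g' [hU' [_ [hl' hs']]]; apply: (hW g g') => //; [exists m, n | rewrite hl' hl].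
Qed.

Lemma open_G_label (P : ZZ k -> Prop) : open_G (fun g : gel L => inG g /\ P (glab g)).
Proof.
apply: (@open_G_basic (fun _ => True)); first exact: open_pathT.
  by move=> g [].
by move=> g g' [_ hP] hg' _ ->.
Qed.

Lemma open_G_far x j : open_G (fun g : gel L => inG g /\ ~ near x j (grng g)).
Proof.
apply: (@open_G_basic (fun y => ~ near x j y)); first exact: open_not_near.
  by move=> g [].
by move=> g g' _ hg' hf.
Qed.

Lemma open_G_pair m n :
  open_G (fun g : gel L => glab g = diffNN m n /\ shift_eq m (grng g) n (gsrc g)).
Proof.
move=> g [hl hs]; exists (fun _ => True), m, n, (fun _ => True).
split; first exact: open_pathT; split; first exact: open_pathT.
by split; last move=> g' [_ [_ []]].
Qed.

Lemma not_tail_eq_near m n (x : ipath L) : ~ tail_eq m x n x ->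
  exists j, forall y, near x j y -> ~ tail_eq m y n y.
Proof.
move=> hno; have [J hJ] : exists J, seg x m (addNN m J) <> seg x n (addNN n J).
  by apply: NNPP => H; apply/hno/tail_eq_segs => J; apply: NNPP => H2; apply: H; exists J.
set M := maxNN (addNN m J) (addNN n J).
have h1 := leNN_trans (le_maxNNl _ _) (leNN_max_coord M).
have h2 := leNN_trans (le_maxNNr _ _) (leNN_max_coord M).
exists (max_coord M) => y hy hse; apply: hJ.
rewrite -(seg_agree hy (leNN_addr m J) h1) -(seg_agree hy (leNN_addr n J) h2).
by have := tail_eq_seg hse (le0NN J); rewrite !addNN0.
Qed.

Lemma tail_eq_of_prefix m n d (x : ipath L) :
  seg x m (addNN m d) = seg x n (addNN n d) ->
  tail_eq (addNN m d) x (addNN n d) x -> tail_eq m x n x.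
Proof.
move=> hd ht; apply: tail_eq_segs => J.
have hle c : leNN (addNN c J) (addNN c (addNN d J)) by apply/leNN_add2l/leNN_addl.
have long c : seg x c (addNN c (addNN d J)) = kcomp (seg x c (addNN c d)) (seg x (addNN c d) (addNN (addNN c d) J)).
  have h2 : leNN (addNN c d) (addNN c (addNN d J)) by rewrite addNNA leNN_addr.
  by rewrite -addNNA seg_comp // leNN_addr.
have key : seg x m (addNN m (addNN d J)) = seg x n (addNN n (addNN d J)).
  by rewrite !long hd; have := tail_eq_seg ht (le0NN J); rewrite !addNN0 => ->.
have [<- _] := seg_split x (leNN_addr m J) (hle m).
by have [<- _] := seg_split x (leNN_addr n J) (hle n); rewrite !addKNN key.
Qed.

Lemma tail_eq_label_near a b m n (y : ipath L) : tail_eq m y n y ->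
  diffNN a b = diffNN m n ->
  exists j, forall y', near y j y' -> tail_eq a y' b y' -> tail_eq m y' n y'.
Proof.
move=> hmn hd; set t := maxNN a m; set d := subNN t m; set d' := subNN t a.
have e1 : addNN m d = t by apply: NN_ext => i; rewrite !ffunE; lia.
have e2 : addNN a d' = t by apply: NN_ext => i; rewrite !ffunE; lia.
have e3 : addNN n d = addNN b d'.
  by apply: NN_ext => i; have := congr1 (fun f : ZZ k => f i) hd; rewrite !ffunE /=; lia.
set T := maxNN t (addNN n d).
have hT1 := leNN_trans (le_maxNNl _ _) (leNN_max_coord T).
have hT2 := leNN_trans (le_maxNNr _ _) (leNN_max_coord T).
exists (max_coord T) => y' hy hab; apply: (tail_eq_of_prefix (d := d)).
  have hmd : leNN (addNN m d) (cst (max_coord T)) by rewrite e1.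
  rewrite (seg_agree hy (leNN_addr m d) hmd) (seg_agree hy (leNN_addr n d) hT2).
  by have := tail_eq_seg hmn (le0NN d); rewrite !addNN0.
by rewrite e1 -e2 e3; exact: tail_eq_add d' hab.
Qed.

Lemma near_path_concat (x x' : ipath L) j : pv x' O0 = pv x (cst j) ->
  exists y, near x j y /\ tail_eq (cst j) y O0 x'.
Proof.
move=> h; have hl : kdom (seg x O0 (cst j)) = pv x' O0 by rewrite seg_dom ?le0NN.
by have [y [h1 h2]] := path_concat hl; rewrite kdeg_seg0 in h1 h2; exists y.
Qed.
End Topology.

(** * Compact subsets of the isotropy bundle *)

Section Compactness.
Variables (k : nat) (L : kgraph k).
Local Notation mor := (kmor L).
Local Notation O0 := (zeroNN k).
Local Notation cst := (constNN k).

Lemma compact_iso_isoL (K : gel L -> Prop) y l : compact_iso K -> K (GEl y l y) -> isoL y l.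
Proof. by move=> [hiso _] /hiso []. Qed.

(* K is covered by the open set of arrows with a label l such that (x, l, x) is in K, together
   with the complements of the cylinders around x; compactness picks finitely many. *)
Lemma compact_iso_near (K : gel L -> Prop) (x : ipath L) : compact_iso K ->
  exists j, forall y l, near x j y -> K (GEl y l y) -> K (GEl x l x).
Proof.
move=> [hiso hc].
pose W (o : option nat) : gel L -> Prop :=
  if o is Some j then fun g => inG g /\ ~ near x j (grng g)
  else fun g => inG g /\ K (GEl x (glab g) x).
have hW o : open_G (W o).
  by case: o => [j|] /=; [exact: open_G_far | exact: (@open_G_label k L (fun l => K (GEl x l x)))].
have cov g : K g -> exists o, W o g.
  move=> hg; have [hG hrs] := hiso g hg.
  case: (classic (K (GEl x (glab g) x))) => hK; first by exists None.
  case: (classic (exists j, ~ near x j (grng g))) => [[j hj]|hno]; first by exists (Some j).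
  have e : grng g = x.
    by apply: path_const_segs_eq => j; apply: NNPP => H; apply: hno; exists j.
  by exfalso; apply: hK; case: g hg hrs e {hG hno} => r lab s /= hg hrs e; subst.
have [s hs] := hc _ W hW cov.
have [j hj] := @near_all _ _ _ s (fun o y => if o is Some j' then near x j' y else True) x
  (fun o _ => if o is Some j' then ex_intro _ j' (fun y h => h) else ex_intro _ 0%N (fun _ _ => I)).
exists j => y l hy hK; have [[j'|] [ho [_ hWo]]] := hs _ hK => //.
by case: hWo; apply: hj hy _ ho.
Qed.

Lemma compact_iso_pairs (K : gel L -> Prop) : compact_iso K ->
  exists P : list (NN k * NN k), forall g, K g -> exists mn, List.In mn P /\
    glab g = diffNN mn.1 mn.2 /\ shift_eq mn.1 (grng g) mn.2 (gsrc g).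
Proof.
move=> [hiso hc].
pose W (mn : NN k * NN k) (g : gel L) :=
  glab g = diffNN mn.1 mn.2 /\ shift_eq mn.1 (grng g) mn.2 (gsrc g).
have hW mn : open_G (W mn) by case: mn => m n; apply: open_G_pair.
have cov g : K g -> exists mn, W mn g.
  by move=> /hiso [[m [n [h1 h2]]] _]; exists (m, n).
by have [s hs] := hc _ W hW cov; exists s.
Qed.

Definition Kset (lam : mor) (a b : NN k) (g : gel L) : Prop :=
  exists y, g = GEl y (diffNN a b) y /\ cyl lam y /\ tail_eq a y b y.

Definition finitely_covered (I : Type) (W : I -> gel L -> Prop) (K : gel L -> Prop) :=
  exists s : list I, forall g, K g -> exists i, List.In i s /\ W i g.

Lemma finitely_covered_union (A I : Type) (W : I -> gel L -> Prop) (K : A -> gel L -> Prop)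
    (E : list A) (Q : A -> Prop) :
  (forall e, List.In e E -> Q e -> finitely_covered W (K e)) ->
  finitely_covered W (fun g => exists e, List.In e E /\ Q e /\ K e g).
Proof.
elim: E => [|e E IH] h; first by exists nil => g [? []].
have [s2 h2] := IH (fun e' he' => h e' (or_intror he')).
case: (classic (Q e)) => hq; last first.
  by exists s2 => g [e' [[<-|he'] [hq' hg]]] //; apply: h2; exists e'.
have [s1 h1] := h e (or_introl erefl) hq.
exists (s1 ++ s2) => g [e' [[<-|he'] [hq' hg]]].
  by have [i [hi hw]] := h1 g hg; exists i; split => //; apply: List.in_or_app; left.
have [i [hi hw]] := h2 g (ex_intro _ e' (conj he' (conj hq' hg))).
by exists i; split => //; apply: List.in_or_app; right.
Qed.

Hypothesis HL : row_finite_no_sources L.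

Lemma Kset_extensions (mu : mor) a b : exists E : list mor, forall g, Kset mu a b g ->
  exists e, List.In e E /\ (kcod e = kdom mu /\ kdeg e = cst 1) /\ Kset (kcomp mu e) a b g.
Proof.
have [_ [E hE]] := HL (kdom mu) (cst 1).
exists E => g [y [-> [/cylE hy hse]]].
set e := seg y (kdeg mu) (addNN (kdeg mu) (cst 1)).
have he1 : kcod e = kdom mu by rewrite seg_cod ?leNN_addr // (pv_seg0 y) hy.
have he2 : kdeg e = cst 1 by rewrite seg_deg ?leNN_addr // addKNN.
exists e; split; first exact: hE.
split => //; exists y; split => //; split => //; apply/cylE.
have hd : kdom mu = kcod e by rewrite he1.
by rewrite kdeg_comp // he2 -(seg_comp y (le0NN (kdeg mu)) (leNN_addr (kdeg mu) (cst 1))) hy.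
Qed.

Lemma Kset_compact lam a b : compact_iso (Kset lam a b).
Proof.
split.
  by move=> g [y [-> [_ hs]]]; split => //; exists a, b; split => //; apply/shift_eqE.
move=> I W hW hcov; apply: NNPP => hno.
have [y [hy hbad]] : exists y, cyl lam y /\
    forall j, ~ finitely_covered W (Kset (seg y O0 (addNN (kdeg lam) (cst j))) a b).
  apply: (@path_of_extensible _ _ (fun mu => ~ finitely_covered W (Kset mu a b))) => // mu hmu.
  apply: NNPP => hext; apply: hmu; have [E hE] := Kset_extensions mu a b.
  have hfc e : List.In e E -> kcod e = kdom mu /\ kdeg e = cst 1 ->
      finitely_covered W (Kset (kcomp mu e) a b).
    by move=> _ [h1 h2]; apply: NNPP => hc; apply: hext; exists e.
  have [s hs] := finitely_covered_union hfc.
  by exists s => g /hE hg; apply: hs.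
have cyl_near j y' : cyl (seg y O0 (addNN (kdeg lam) (cst j))) y' -> near y j y'.
  by move=> /cylE; rewrite kdeg_seg0 => h; apply: seg0_agree_le h (leNN_addl _ _).
have hsey : tail_eq a y b y.
  apply: NNPP => /not_tail_eq_near [j hj]; apply: (hbad j); exists nil.
  by move=> g [y' [-> [/cyl_near hc hse]]]; case: (hj y' hc hse).
have [i hWi] := hcov (GEl y (diffNN a b) y) (ex_intro _ y (conj erefl (conj hy hsey))).
have [U [m [n [V [hU [hV [[/= hUy [hVy [hl /shift_eqE hsh]]] hZ]]]]]]] := hW i _ hWi.
have [j1 hj1] := tail_eq_label_near hsh hl.
have [j2 hj2] := open_path_near hU hUy.
have [j3 hj3] := open_path_near hV hVy.
apply: (hbad (maxn j1 (maxn j2 j3))); exists [:: i] => g [y' [-> [/cyl_near hn h2]]].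
have hn1 := near_mono (leq_maxl _ _) hn; have hn23 := near_mono (leq_maxr _ _) hn.
exists i; split; first by left.
apply: hZ; split; first exact/hj2/(near_mono (leq_maxl _ _) hn23).
split; first exact/hj3/(near_mono (leq_maxr _ _) hn23).
by split => //; apply/shift_eqE; apply: hj1 hn1 h2.
Qed.
End Compactness.

(** * The invariant open set U_D *)

Section FromD.
Variables (k : nat) (L : kgraph k).
Local Notation mor := (kmor L).
Local Notation O0 := (zeroNN k).
Local Notation basic := ((ipath L -> Prop) * (gel L -> Prop) * (circ -> Prop))%type.

Definition cyl_basic (lam : mor) : basic := (cyl lam, fun _ => False, fun _ => True).

(* The constraint of condition (ii) attached to one pair (a, b), as a basic open set. *)
Definition ball_basic (lam : mor) (a b : NN k) (z : torus k) (eps : R) : basic :=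
  (cyl lam, Kset lam a b, fun w => Rlt (cdist (zpow z (diffNN a b)) w) eps).

Lemma cyl_basic_valid lam : valid_basic (cyl_basic lam).
Proof.
split; first exact: open_cyl.
by split; [split => // I W _ _; exists nil | move=> w _; exists R1; split; [lra|]].
Qed.

Lemma ball_basic_valid lam a b z eps : row_finite_no_sources L ->
  valid_basic (ball_basic lam a b z eps).
Proof.
by move=> HL; split; [exact: open_cyl | split; [exact: Kset_compact | exact: open_circ_ball]].
Qed.

Lemma Obasic_ball_basic (x : ipath L) lam a b z eps : Rlt 0 eps -> cyl lam x ->
  Obasic (ball_basic lam a b z eps).1.1 (ball_basic lam a b z eps).1.2 (ball_basic lam a b z eps).2
    (qstab x z).
Proof.
move=> he hx; split => //= l [y [e [_ hse]]]; case: e => exy -> _; subst y.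
by rewrite qcharE ?cdist_refl //; apply/isoLE; exists a, b.
Qed.

Lemma Obasic_ball_basic_dist (y : ipath L) lam a b z eps w : cyl lam y -> tail_eq a y b y ->
  Obasic (ball_basic lam a b z eps).1.1 (ball_basic lam a b z eps).1.2 (ball_basic lam a b z eps).2
    (qstab y w) ->
  Rlt (cdist (zpow z (diffNN a b)) (zpow w (diffNN a b))) eps.
Proof.
move=> hy hse [_ /= hK]; have := hK (diffNN a b) (ex_intro _ y (conj erefl (conj hy hse))).
by rewrite qcharE //; apply/isoLE; exists a, b.
Qed.

Variable D : kobj L * torus k -> Prop.
Hypothesis hDi : cond_i D.
Hypothesis hDii : cond_ii D.

Lemma D_saturation_tail_eq m (x : ipath L) n y z :
  tail_eq m x n y -> D_saturation D y z -> D_saturation D x z.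
Proof.
move=> [hpv _] [j hj]; exists (addNN m j); have [hher _] := hDi z.
have := hher (seg y j (addNN n j)).
by rewrite seg_cod ?leNN_addl // seg_dom ?leNN_addl // hpv; apply.
Qed.

(* Condition (ii) at x(n), with the tolerance met exactly, shows that only the character matters. *)
Lemma D_saturation_char (x : ipath L) z z' : (forall l, isoL x l -> zpow z l = zpow z' l) ->
  D_saturation D x z' -> D_saturation D x z.
Proof.
move=> hag [n hn].
have hc : cyl (kid (pv x n)) (shift_path x n) by apply/cyl_kid; rewrite pv_shift_path0.
have [eps [n' [mns [he [_ hprop]]]]] := hDii hn hc.
have [m hm] := hprop (shift_path x n) (proj2 (cyl_seg _ _ _) erefl).
exists (addNN n m); apply: hm => mn _ /shift_eqE hs.
have hi : isoL (shift_path x n) (diffNN mn.1 mn.2) by apply/isoLE; exists mn.1, mn.2.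
by rewrite (hag _ (isoL_tail_eq (tail_eq_sym (tail_eq_shift x n)) hi)) cdist_refl.
Qed.

Definition UD (s : stab L) : Prop := exists z, q_rel (sx s) z s /\ D_saturation D (sx s) z.

Lemma q_preimage_UD x z : q_preimage UD x z <-> D_saturation D x z.
Proof.
split.
  move=> [s [[hx hq] [z' [[_ hq'] hd]]]]; rewrite hx in hq' hd.
  by apply: D_saturation_char hd => l hl; rewrite -hq // -hq'.
move=> hd; exists (qstab x z); split; first exact: q_rel_qstab.
by exists z; split; first exact: q_rel_qstab.
Qed.

Lemma UD_invariant : G_invariant UD.
Proof.
move=> g s s' [m [n [hl /shift_eqE hsh]]] [hsrc [hrng hchi]] [z [[_ hq] hd]].
exists z; split; last by rewrite hrng; rewrite -hsrc in hd; apply: D_saturation_tail_eq hsh hd.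
split => // l; rewrite hrng => hl'; rewrite hchi // -hsrc in hq *.
have -> : addZZ (addZZ (oppZZ (glab g)) l) (glab g) = l.
  by apply: ZZ_ext => i; rewrite !ffunE; lia.
by apply: hq; apply: isoL_tail_eq hsh hl'.
Qed.

Hypothesis HL : row_finite_no_sources L.

Lemma UD_open : open_stab UD.
Proof.
move=> s [z [/q_rel_qstabE es [n0 hn0]]]; set x := sx s in es hn0.
have hc : cyl (kid (pv x n0)) (shift_path x n0) by apply/cyl_kid; rewrite pv_shift_path0.
have [eps [n [mns [he [hp hprop]]]]] := hDii hn0 hc.
set lam := seg x O0 (addNN n0 n).
pose bmn (mn : NN k * NN k) := ball_basic lam (addNN n0 mn.1) (addNN n0 mn.2) z eps.
have hlamx : cyl lam x by apply/cylE; rewrite kdeg_seg0.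
exists (cyl_basic lam :: List.map bmn mns); split; [|split].
- move=> b [<-|/List.in_map_iff [mn [<- _]]]; [exact: cyl_basic_valid | exact: ball_basic_valid].
- rewrite es => b [<-|/List.in_map_iff [mn [<- _]]]; first by split.
  exact: Obasic_ball_basic.
- move=> s' hin; have [w ew] := stab_qstab s'; set y := sx s' in ew.
  have hly : cyl lam y by have [] := hin _ (or_introl erefl).
  have hc0 : cyl (seg0 (shift_path x n0) n) (shift_path y n0).
    apply/cyl_seg; rewrite !seg_shift ?le0NN // addNN0.
    by move/cylE: hly; rewrite kdeg_seg0 => h; apply: seg_agree h (leNN_addr _ _) (leNN_refl _).
  have [m hm] := hprop _ hc0.
  exists w; split; first by rewrite ew; apply: q_rel_qstab.
  exists (addNN n0 m); apply: hm => mn hmn /shift_eqE hs.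
  have hse : tail_eq (addNN n0 mn.1) y (addNN n0 mn.2) y.
    have sh c : tail_eq (addNN n0 c) y c (shift_path y n0).
      by have := tail_eq_add c (tail_eq_shift y n0); rewrite add0NN.
    exact: tail_eq_trans (sh _) (tail_eq_trans hs (tail_eq_sym (sh _))).
  rewrite -(diffNN_addl n0); apply: (Obasic_ball_basic_dist hly hse).
  by rewrite -ew; apply: hin; right; apply: List.in_map.
Qed.
End FromD.

(** * The set D_U of an invariant open set U *)

Section ToD.
Variables (k : nat) (L : kgraph k).
Local Notation O0 := (zeroNN k).
Local Notation cst := (constNN k).

Definition dmn (mn : NN k * NN k) : ZZ k := diffNN mn.1 mn.2.

(* P holds at (y, w) for y close to x and w close to z on the labels of finitely many isotropy
   arrows at x: the shape of condition (ii). *)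
Definition qstab_nbhd (P : stab L -> Prop) (x : ipath L) (z : torus k) : Prop :=
  exists (j : nat) (eps : R) (mns : list (NN k * NN k)),
    Rlt 0 eps /\ (forall mn, List.In mn mns -> tail_eq mn.1 x mn.2 x) /\
    forall y w, near x j y ->
      (forall mn, List.In mn mns -> tail_eq mn.1 y mn.2 y ->
         Rlt (cdist (zpow z (dmn mn)) (zpow w (dmn mn))) eps) ->
      P (qstab y w).

Lemma qstab_nbhd_near (P : stab L -> Prop) x z :
  (exists j, forall y w, near x j y -> P (qstab y w)) -> qstab_nbhd P x z.
Proof. by move=> [j hj]; exists j, R1, nil; split; [lra | split => // y w hy _; apply: hj]. Qed.

Lemma qstab_nbhd_mono (P Q : stab L -> Prop) x z :
  (forall s, P s -> Q s) -> qstab_nbhd P x z -> qstab_nbhd Q x z.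
Proof.
move=> hPQ [j [eps [mns [he [hm h]]]]]; exists j, eps, mns.
split; first exact: he; split; first exact: hm.
by move=> y w hy hw; apply: hPQ; apply: h hy hw.
Qed.

Lemma qstab_nbhd_and (P Q : stab L -> Prop) x z :
  qstab_nbhd P x z -> qstab_nbhd Q x z -> qstab_nbhd (fun s => P s /\ Q s) x z.
Proof.
move=> [j1 [e1 [m1 [he1 [hm1 h1]]]]] [j2 [e2 [m2 [he2 [hm2 h2]]]]].
exists (maxn j1 j2), (Rmin e1 e2), (m1 ++ m2); split; first exact: Rmin_pos.
split; first by move=> mn h; case: (List.in_app_or _ _ _ h) => h'; [apply: hm1 | apply: hm2].
move=> y w hy hw; split.
  apply: h1 => [|mn h hs]; first exact: near_mono (leq_maxl _ _) hy.
  by have := hw mn (List.in_or_app _ _ _ (or_introl h)) hs; have := Rmin_l e1 e2; lra.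
apply: h2 => [|mn h hs]; first exact: near_mono (leq_maxr _ _) hy.
by have := hw mn (List.in_or_app _ _ _ (or_intror h)) hs; have := Rmin_r e1 e2; lra.
Qed.

Lemma qstab_nbhd_all (A : Type) (bs : list A) (P : A -> stab L -> Prop) x z :
  (forall b, List.In b bs -> qstab_nbhd (P b) x z) ->
  qstab_nbhd (fun s => forall b, List.In b bs -> P b s) x z.
Proof.
elim: bs => [|b bs IH] h.
  by apply: qstab_nbhd_near; exists 0%N.
apply: qstab_nbhd_mono (qstab_nbhd_and (h b (or_introl erefl)) (IH (fun b' hb => h b' (or_intror hb)))).
by move=> s [hb hbs] b' [<-|]; [| apply: hbs].
Qed.

Lemma qstab_nbhd_self (P : stab L -> Prop) x z :
  qstab_nbhd P x z -> exists j, forall y, near x j y -> P (qstab y z).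
Proof. by move=> [j [eps [mns [he [_ h]]]]]; exists j => y hy; apply: h => // mn _ _; rewrite cdist_refl. Qed.

Lemma qstab_nbhd_pair (Kb : gel L -> Prop) (Vb : circ -> Prop) x z mn : open_circ Vb ->
  (Kb (GEl x (dmn mn) x) -> Vb (zpow z (dmn mn))) ->
  qstab_nbhd (fun s => tail_eq mn.1 (sx s) mn.2 (sx s) -> Kb (GEl x (dmn mn) x) ->
                        Vb (schi s (dmn mn))) x z.
Proof.
move=> hVb hx; case: (classic (tail_eq mn.1 x mn.2 x)) => hse; last first.
  have [j hj] := not_tail_eq_near hse.
  by apply: qstab_nbhd_near; exists j => y w hy /= /(hj y hy).
case: (classic (Kb (GEl x (dmn mn) x))) => hK; last first.
  by apply: qstab_nbhd_near; exists 0%N => y w _ _ /hK.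
have [e [he hball]] := hVb _ (hx hK).
exists 0%N, e, [:: mn]; split => //; split; first by move=> mn' [<-|].
move=> y w _ hw hsey _ /=; rewrite qcharE; last by apply/isoLE; exists mn.1, mn.2.
by apply: hball; apply: hw => //; left.
Qed.

Lemma qstab_nbhd_basic b x z : valid_basic b -> Obasic b.1.1 b.1.2 b.2 (qstab x z) ->
  qstab_nbhd (Obasic b.1.1 b.1.2 b.2) x z.
Proof.
case: b => [[Ub Kb] Vb] [hUb [hKb hVb]] /= [hx hxK].
have [P hP] := compact_iso_pairs hKb.
have hU : qstab_nbhd (fun s => Ub (sx s)) x z.
  by have [j hj] := open_path_near hUb hx; apply: qstab_nbhd_near; exists j => y w /hj.
have hK : qstab_nbhd (fun s => forall l, Kb (GEl (sx s) l (sx s)) -> Kb (GEl x l x)) x z.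
  by have [j hj] := compact_iso_near x hKb; apply: qstab_nbhd_near; exists j => y w /hj.
have hV : qstab_nbhd (fun s => forall mn, List.In mn P -> tail_eq mn.1 (sx s) mn.2 (sx s) ->
    Kb (GEl x (dmn mn) x) -> Vb (schi s (dmn mn))) x z.
  apply: (qstab_nbhd_all (P := fun mn s => tail_eq mn.1 (sx s) mn.2 (sx s) ->
    Kb (GEl x (dmn mn) x) -> Vb (schi s (dmn mn)))) => mn _.
  apply: qstab_nbhd_pair hVb _ => h.
  by have := hxK _ h; rewrite /= qcharE //; apply: compact_iso_isoL hKb h.
apply: qstab_nbhd_mono (qstab_nbhd_and hU (qstab_nbhd_and hK hV)) => s [hs [hsK hsV]].
split => // l hl; have [mn [hin [/= hlab /shift_eqE hsh]]] := hP _ hl.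
by rewrite hlab; apply: hsV => //; rewrite /dmn -hlab; apply: hsK.
Qed.

Lemma qstab_nbhd_basics bs x z : (forall b, List.In b bs -> valid_basic b) ->
  in_basics bs (qstab x z) -> qstab_nbhd (in_basics bs) x z.
Proof. by move=> hv hin; apply: qstab_nbhd_all => b hb; apply: qstab_nbhd_basic; auto. Qed.

Lemma tail_eq_pairs_near (mns : list (NN k * NN k)) (y : ipath L) :
  exists j, forall y', near y j y' ->
    forall mn, List.In mn mns -> tail_eq mn.1 y' mn.2 y' -> tail_eq mn.1 y mn.2 y.
Proof.
apply: (@near_all k L _ mns (fun mn y' => tail_eq mn.1 y' mn.2 y' -> tail_eq mn.1 y mn.2 y)).
move=> mn _; case: (classic (tail_eq mn.1 y mn.2 y)) => h; first by exists 0%N.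
by have [j hj] := not_tail_eq_near h; exists j => y' hy /(hj y' hy).
Qed.

Variable U : stab L -> Prop.
Hypothesis hUo : open_stab U.
Hypothesis hUi : G_invariant U.

Definition DU (p : kobj L * torus k) : Prop :=
  forall x : ipath L, pv x O0 = p.1 -> q_preimage U x p.2.

(* Every path through a point near x is tail-equivalent to a path near x. *)
Lemma q_preimage_near x z : U (qstab x z) -> exists j, forall x', pv x' O0 = pv x (cst j) ->
  q_preimage U x' z.
Proof.
move=> hU; have [bs [hval [hin hall]]] := hUo hU.
have [j hj] := qstab_nbhd_self (qstab_nbhd_basics hval hin).
exists j => x' hx'; have [y [hy hse]] := near_path_concat hx'.
by apply: (q_preimage_tail_eq hUi (tail_eq_sym hse)); apply/q_preimageE/hall/hj.
Qed.

Lemma q_preimage_DU x z : q_preimage U x z <-> D_saturation DU x z.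
Proof.
split => [/q_preimageE /q_preimage_near [j hj] | [n hn]]; first by exists (cst j).
exact: q_preimage_tail_eq hUi (tail_eq_shift x n) (hn _ (pv_shift_path0 x n)).
Qed.

Lemma DU_cond_i : cond_i DU.
Proof.
move=> z; split.
- move=> l hl x hx /=; have [y [h1 h2]] := path_concat (esym hx).
  apply: (q_preimage_tail_eq hUi (tail_eq_sym h2)); apply: hl => /=.
  by rewrite (pv0_seg0 y (kdeg l)) h1.
- move=> v n hn x hx /=; have := hn (seg x O0 n); rewrite seg_dom ?le0NN // => h.
  apply: q_preimage_tail_eq hUi (tail_eq_shift x n) _.
  by apply: h (shift_path x n) _; rewrite ?seg_cod ?le0NN ?kdeg_seg0 ?pv_shift_path0.
Qed.

Lemma DU_cond_ii : cond_ii DU.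
Proof.
move=> v z hD x /cyl_kid hx; have /q_preimageE hU := hD x hx.
have [bs [hval [hin hall]]] := hUo hU.
have [j [eps [mns [he [hm hd]]]]] := qstab_nbhd_basics hval hin.
exists eps, (cst j), mns; split => //; split; first by move=> mn /hm /shift_eqE.
move=> y /cyl_seg hy; have [j' hj'] := tail_eq_pairs_near mns y.
exists (cst (maxn j j')) => w hw x' hx' /=.
have [y'' [hy'' hse]] := near_path_concat hx'.
apply: (q_preimage_tail_eq hUi (tail_eq_sym hse)); apply/q_preimageE/hall/hd.
  by rewrite /near -hy; apply: near_mono (leq_maxl j j') hy''.
move=> mn h hs; apply: hw => //; apply/shift_eqE; apply: hj' h hs.
exact: near_mono (leq_maxr _ _) hy''.
Qed.
End ToD.

(* A set D satisfying (i) is recovered from its saturation: a vertex outside D' starts an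
   infinite path avoiding D', while D-membership propagates to all later vertices. *)
Lemma D_saturation_inj k (L : kgraph k) (D D' : kobj L * torus k -> Prop) :
  cond_i D' -> (forall x z, D_saturation D x z -> D_saturation D' x z) -> forall p, D p -> D' p.
Proof.
move=> hD' heq [v z] hp; apply: NNPP => hn; have [hher hsat] := hD' z.
have [y [/cyl_kid hv hy]] : exists y : ipath L, cyl (kid v) y /\
    forall j, ~ D' (kdom (seg y (zeroNN k) (addNN (kdeg (kid v)) (constNN k j))), z).
  apply: (@path_of_extensible _ _ (fun mu => ~ D' (kdom mu, z))); first by rewrite kid_dom.
  move=> mu hmu; apply: NNPP => hno; apply/hmu/(hsat _ (constNN k 1)) => e he1 he2.
  by apply: NNPP => he3; apply: hno; exists e; rewrite kcomp_dom.
have [n hDn] : D_saturation D' y z by apply: heq; exists (zeroNN k); rewrite hv.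
apply: (hy (max_coord n)); rewrite kdeg_id add0NN seg_dom ?le0NN //.
have hle := leNN_max_coord n.
by have := hher (seg y n (constNN k (max_coord n))); rewrite seg_cod // seg_dom //; apply.
Qed.

Theorem proposition4p15 (k : nat) (L : kgraph k) (HL : row_finite_no_sources L) :
  (forall D : kobj L * torus k -> Prop, cond_i D -> cond_ii D ->
     exists U : stab L -> Prop,
       open_stab U /\ G_invariant U /\
       (forall x z, q_preimage U x z <-> D_saturation D x z) /\
       (forall U' : stab L -> Prop, open_stab U' -> G_invariant U' ->
          (forall x z, q_preimage U' x z <-> D_saturation D x z) ->
          forall s, U s <-> U' s)) /\
  (forall U : stab L -> Prop, open_stab U -> G_invariant U ->
     exists D : kobj L * torus k -> Prop,
       cond_i D /\ cond_ii D /\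
       (forall x z, q_preimage U x z <-> D_saturation D x z) /\
       (forall D' : kobj L * torus k -> Prop, cond_i D' -> cond_ii D' ->
          (forall x z, q_preimage U x z <-> D_saturation D' x z) ->
          forall p, D p <-> D' p)).
Proof.
split.
- move=> D hi hii; exists (UD D); split; first exact: UD_open.
  split; first exact: UD_invariant.
  split; first by move=> x z; apply: q_preimage_UD.
  move=> U' _ _ hU' s; have [z ->] := stab_qstab s.
  by rewrite -!q_preimageE q_preimage_UD // hU'.
- move=> U hUo hUi; exists (DU U); split; first exact: DU_cond_i.
  split; first exact: DU_cond_ii.
  split; first by move=> x z; apply: q_preimage_DU.
  move=> D' hi' _ hD' p; split; apply: D_saturation_inj => //.
  + by move=> x z; rewrite -q_preimage_DU // hD'.
  + exact: DU_cond_i.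
  + by move=> x z; rewrite -hD' q_preimage_DU.
Qed.
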